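(* For every well-named $\mu$-sentence $\varphi$, if $\mathsf{lab}\mu\mathsf{CK}_\omega\vdash\varphi$ then $\mathsf{CK}\models\varphi$. More precisely: if $M=\langle W,W^\bot,\preceq,R,V\rangle$ is a $\mathsf{CK}$-model and $w\in W$ with $M,w\not\models\varphi$, then no pre-proof with root $\vdash x:\varphi$ is a $\mathsf{lab}\mu\mathsf{CK}_\omega$-proof.
   Context: Syntax. Fix disjoint sets $\mathrm{Prop}$ (propositions) and $\mathrm{Var}$ (propositional variables). $\mu$-formulas are given by $\varphi::=P\mid X\mid\bot\mid\varphi\land\varphi\mid\varphi\lor\varphi\mid\varphi\to\varphi\mid\Box\varphi\mid\Diamond\varphi\mid\mu X.\varphi\mid\nu X.\varphi$ with $P\in\mathrm{Prop}$, $X\in\mathrm{Var}$, where $\mu X.\varphi$ and $\nu X.\varphi$ may only be formed when $X$ is positive in $\varphi$. Positivity/negativity is defined inductively: $X$ is both positive and negative in $P$, in $\bot$, and in any variable $Y\neq X$; $X$ is positive in $X$; if $X$ is positive (resp. negative) in $\varphi$ and $\psi$, then it is positive (resp. negative) in $\varphi\land\psi$, $\varphi\lor\psi$, $\Box\varphi$, $\Diamond\varphi$; if $X$ is negative (resp. positive) in $\varphi$ and positive (resp. negative) in $\psi$, then $X$ is positive (resp. negative) in $\varphi\to\psi$; $X$ is both positive and negative in $\mu X.\varphi$ and $\nu X.\varphi$. $\eta$ ranges over $\{\mu,\nu\}$. A sentence has no free variables. $\varphi$ is guarded if for every subformula $\eta X.\psi$, every occurrence of $X$ in $\psi$ is in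 the scope of $\Box$ or $\Diamond$; well-bounded if each variable occurring bound in $\varphi$ is bound by exactly one fixed-point operator $\eta X$ in $\varphi$; well-named if guarded and well-bounded. For well-named $\varphi$ and a subformula $\eta X.\psi$, write $\psi_X:=\psi$. An auxiliary ''local diamond'' $\hat\Diamond\psi$ is also used (semantics: $w\models\hat\Diamond\psi$ iff some $v$ with $wRv$ has $v\models\psi$). Models and semantics. A $\mathsf{CK}$-model is $M=\langle W,W^\bot,\preceq,R,V\rangle$ with $W\neq\emptyset$, $W^\bot\subseteq W$, $\preceq$ reflexive transitive on $W$, $R$ a binary relation on $W$, $V:\mathrm{Prop}\to\mathcal P(W)$, such that $w\preceq v$, $w\in V(P)$ imply $v\in V(P)$; $W^\bot\subseteq V(P)$ for all $P$; $W^\bot$ closed under $\preceq$ and $R$. $\|P\|=V(P)$; $\|\bot\|=W^\bot$; $\land,\lor$ pointwise; $\|\varphi\to\psi\|=\{w\mid\forall v\succeq w\,(v\in\|\varphi\|\Rightarrow v\in\|\psi\|)\}$; $\|\Box\varphi\|=\{w\mid\forall v,u\,(w\preceq v,\ vRu\Rightarrow u\in\|\varphi\|)\}$; $\|\Diamond\varphi\|=\{w\mid\forall v\succeq w\,\exists u\,(vRu\wedge u\in\|\varphi\|)\}$; $\|\mu X.\varphi\|$, $\|\nu X.\varphi\|$ are the least/greatest fixed points of $A\mapsto\|\varphi\|^{M[X\mapsto A]}$ where $M[X\mapsto A]$ sets $V(X):=A$. $\mathsf{CK}\models\varphi$ means $M,w\models\varphi$ for all $\mathsf{CK}$-models $M$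 and worlds $w$. Proof system $\mathsf{lab}\mu\mathsf{CK}_\omega$. Fix a set of world variables $x,y,z,\dots$ disjoint from $\mathrm{Var}$. A labeled formula is $x:\varphi$. A sequent is $\mathbf R,\Gamma\vdash\Delta$ where $\mathbf R$ is a finite set of atoms $x\preceq y$, $xRy$, and $\Gamma,\Delta$ are finite sets of labeled formulas (commas denote union). Axioms: $\mathbf R,\Gamma,x:\bot\vdash\Delta,x:P$ and $\mathbf R,\Gamma,x:P\vdash\Delta,x:P$ ($P\in\mathrm{Prop}$). Rules (conclusion $\Leftarrow$ premise(s); ''fresh'' = not occurring in the conclusion; in each logical rule the displayed formula of the conclusion is principal and the newly added formulas of the premises are minor; $\preceq$-pres and $\preceq$-trans have no principal/minor formulas): $\preceq$-pres: $\mathbf R,x\preceq y,\Gamma,x:\varphi\vdash\Delta\Leftarrow\mathbf R,x\preceq y,\Gamma,x:\varphi,y:\varphi\vdash\Delta$. $\preceq$-trans: $\mathbf R,x\preceq y,y\preceq z,\Gamma\vdash\Delta\Leftarrow\mathbf R,x\preceq y,y\preceq z,x\preceq z,\Gamma\vdash\Delta$. $\land$l: $\Gamma,x:\varphi\land\psi\vdash\Delta\Leftarrow\Gamma,x:\varphi\land\psi,x:\varphi,x:\psi\vdash\Delta$. $\land$r: $\Gamma\vdash\Delta,x:\varphi\land\psi\Leftarrow$ both $\Gamma\vdash\Delta,x:\varphi\land\psi,x:\varphi$ and $\Gamma\vdash\Delta,x:\varphi\land\psi,x:\psi$. $\lor$l: $\Gamma,x:\varphi\lor\psi\vdash\Delta\Leftarrow$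 both $\Gamma,x:\varphi\lor\psi,x:\varphi\vdash\Delta$ and $\Gamma,x:\varphi\lor\psi,x:\psi\vdash\Delta$. $\lor$r: $\Gamma\vdash\Delta,x:\varphi\lor\psi\Leftarrow\Gamma\vdash\Delta,x:\varphi\lor\psi,x:\varphi,x:\psi$. $\to$l: $\Gamma,x:\varphi\to\psi\vdash\Delta\Leftarrow$ both $\Gamma,x:\varphi\to\psi\vdash\Delta,x:\varphi$ and $\Gamma,x:\varphi\to\psi,x:\psi\vdash\Delta$. $\to$r: $\mathbf R,\Gamma\vdash\Delta,x:\varphi\to\psi\Leftarrow\mathbf R,x\preceq y,\Gamma,y:\varphi\vdash\Delta,x:\varphi\to\psi,y:\psi$ ($y$ fresh). $\Box$l: $\mathbf R,\Gamma,x:\Box\varphi\vdash\Delta\Leftarrow\mathbf R,\Gamma,x:\Box\varphi,\{y:\varphi\mid xRy\in\mathbf R\}\vdash\Delta$. $\Box$r: $\mathbf R,\Gamma\vdash\Delta,x:\Box\varphi\Leftarrow\mathbf R,x\preceq y,yRz,\Gamma\vdash\Delta,x:\Box\varphi,z:\varphi$ ($y,z$ fresh). $\Diamond$l: $\mathbf R,\Gamma,x:\Diamond\varphi\vdash\Delta\Leftarrow\mathbf R,xRy,\Gamma,x:\Diamond\varphi,y:\varphi\vdash\Delta$ ($y$ fresh). $\Diamond$r: $\mathbf R,\Gamma\vdash\Delta,x:\Diamond\varphi\Leftarrow\mathbf R,x\preceq y,\Gamma\vdash\Delta,x:\Diamond\varphi,y:\hat\Diamond\varphi$ ($y$ fresh).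 $\hat\Diamond$r: $\mathbf R,\Gamma\vdash\Delta,x:\hat\Diamond\varphi\Leftarrow\mathbf R,\Gamma\vdash\Delta,x:\hat\Diamond\varphi,\{y:\varphi\mid xRy\in\mathbf R\}$. $\eta$l: $\Gamma,x:\eta X.\varphi_X\vdash\Delta\Leftarrow\Gamma,x:\eta X.\varphi_X,x:\varphi_X\vdash\Delta$; $\eta$r symmetric on the right. regen-l: $\Gamma,x:X\vdash\Delta\Leftarrow\Gamma,x:X,x:\varphi_X\vdash\Delta$; regen-r symmetric on the right. A pre-proof is a (possibly infinite) tree of sequents in which every leaf is an axiom and every inner node together with its children is an instance of a rule (node = conclusion, children = premises). A trace along an infinite branch $(S_i)_{i<\omega}$ is a sequence $(x_i:\varphi_i)_{i<\omega}$ of labeled formulas in the respective sequents such that for each $i$ either $x_{i+1}:\varphi_{i+1}=x_i:\varphi_i$, or $x_i:\varphi_i$ is the principal formula of the rule applied at $S_i$ and $x_{i+1}:\varphi_{i+1}$ is a minor formula of it in $S_{i+1}$. $\eta X.\varphi_X$ is left- (resp. right-) regenerated infinitely often in the trace if infinitely many steps are applications of regen-l (resp. regen-r) with principal formula $x_i:X$ on the left (resp. right) followed in the trace by its minor formula. A trace is progressing if, for the outermost infinitely often regenerated fixed-point formula $\eta X.\varphi_X$ (every other infinitely often regenerated one is its subformula), either $\eta=\nu$ and it is right-regenerated infinitely often, or $\eta=\mu$ and it is left-regenerated infinitely often. A $\mathsf{lab}\mu\mathsf{CK}_\omega$-proof is a pre-proof every infinite branch of which carries a progressing trace. $\mathsf{lab}\mu\mathsf{CK}_\omega\vdash\varphi$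 means there is a world variable $x$ and a proof whose root is $\vdash x:\varphi$ (with $\mathbf R$ and $\Gamma$ empty). *)

From Stdlib Require Import List Arith.
Import ListNotations.

Inductive eta := Mu | Nu.

(* propositions and propositional variables are both indexed by nat, but live in
   different constructors (disjoint sets).  FLDia is the auxiliary local diamond. *)
Inductive form : Type :=
| FProp (P : nat)
| FVar (X : nat)
| FBot
| FAnd (a b : form)
| FOr (a b : form)
| FImp (a b : form)
| FBox (a : form)
| FDia (a : form)
| FLDia (a : form)
| FFix (e : eta) (X : nat) (a : form).

Fixpoint pos (X : nat) (f : form) {struct f} : Prop :=
  match f with
  | FProp _ | FBot | FVar _ => True
  | FAnd a b | FOr a b => pos X a /\ pos X b
  | FImp a b => neg X a /\ pos X b
  | FBox a | FDia a | FLDia a => pos X a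
  | FFix _ Y a => Y = X \/ pos X a
  end
with neg (X : nat) (f : form) {struct f} : Prop :=
  match f with
  | FProp _ | FBot => True
  | FVar Y => Y <> X
  | FAnd a b | FOr a b => neg X a /\ neg X b
  | FImp a b => pos X a /\ neg X b
  | FBox a | FDia a | FLDia a => neg X a
  | FFix _ Y a => Y = X \/ neg X a
  end.

Fixpoint mu_form (f : form) : Prop :=
  match f with
  | FProp _ | FBot | FVar _ => True
  | FAnd a b | FOr a b | FImp a b => mu_form a /\ mu_form b
  | FBox a | FDia a => mu_form a
  | FLDia _ => False
  | FFix _ X a => pos X a /\ mu_form a
  end.

Fixpoint subform (g f : form) : Prop :=
  g = f \/
  match f with
  | FAnd a b | FOr a b | FImp a b => subform g a \/ subform g b
  | FBox a | FDia a | FLDia a => subform g a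
  | FFix _ _ a => subform g a
  | _ => False
  end.

Fixpoint occurs_free (X : nat) (f : form) : Prop :=
  match f with
  | FProp _ | FBot => False
  | FVar Y => Y = X
  | FAnd a b | FOr a b | FImp a b => occurs_free X a \/ occurs_free X b
  | FBox a | FDia a | FLDia a => occurs_free X a
  | FFix _ Y a => Y <> X /\ occurs_free X a
  end.

Definition sentence (f : form) : Prop := forall X, ~ occurs_free X f.

Fixpoint guarded_occ (X : nat) (f : form) : Prop :=
  match f with
  | FProp _ | FBot => True
  | FVar Y => Y <> X
  | FAnd a b | FOr a b | FImp a b => guarded_occ X a /\ guarded_occ X b
  | FBox _ | FDia _ | FLDia _ => True
  | FFix _ _ a => guarded_occ X a
  end.

Definition guarded (f : form) : Prop :=
  forall e X b, subform (FFix e X b) f -> guarded_occ X b.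

Fixpoint count_binders (X : nat) (f : form) : nat :=
  match f with
  | FProp _ | FBot | FVar _ => 0
  | FAnd a b | FOr a b | FImp a b => count_binders X a + count_binders X b
  | FBox a | FDia a | FLDia a => count_binders X a
  | FFix _ Y a => (if Nat.eqb Y X then 1 else 0) + count_binders X a
  end.

Definition well_bounded (f : form) : Prop := forall X, count_binders X f <= 1.

Definition well_named (f : form) : Prop := guarded f /\ well_bounded f.

(* eta X . b is the (unique, for well-named phi0) binder of X in phi0; b = phi0_X *)
Definition binds (phi0 : form) (X : nat) (e : eta) (b : form) : Prop :=
  subform (FFix e X b) phi0.

Record CKModel := {
  W : Type;
  W_inh : inhabited W;
  Wbot : W -> Prop;
  wle : W -> W -> Prop;
  wR : W -> W -> Prop;
  V : nat -> W -> Prop;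
  wle_refl : forall w, wle w w;
  wle_trans : forall u v w, wle u v -> wle v w -> wle u w;
  V_mono : forall P w v, wle w v -> V P w -> V P v;
  Wbot_V : forall P w, Wbot w -> V P w;
  Wbot_le : forall w v, wle w v -> Wbot w -> Wbot v;
  Wbot_R : forall w v, wR w v -> Wbot w -> Wbot v
}.

Definition upd {T : Type} (rho : nat -> T -> Prop) (X : nat) (A : T -> Prop) :
  nat -> T -> Prop := fun Y => if Nat.eqb Y X then A else rho Y.

(* least fixed point = intersection of prefixed points,
   greatest fixed point = union of postfixed points (Knaster-Tarski) *)
Fixpoint sem (M : CKModel) (rho : nat -> W M -> Prop) (f : form) {struct f} : W M -> Prop :=
  match f with
  | FProp P => V M P
  | FVar X => rho X
  | FBot => Wbot M
  | FAnd a b => fun w => sem M rho a w /\ sem M rho b w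
  | FOr a b => fun w => sem M rho a w \/ sem M rho b w
  | FImp a b => fun w => forall v, wle M w v -> sem M rho a v -> sem M rho b v
  | FBox a => fun w => forall v u, wle M w v -> wR M v u -> sem M rho a u
  | FDia a => fun w => forall v, wle M w v -> exists u, wR M v u /\ sem M rho a u
  | FLDia a => fun w => exists v, wR M w v /\ sem M rho a v
  | FFix Mu X a => fun w =>
      forall A : W M -> Prop, (forall u, sem M (upd rho X A) a u -> A u) -> A w
  | FFix Nu X a => fun w =>
      exists A : W M -> Prop, (forall u, A u -> sem M (upd rho X A) a u) /\ A w
  end.

(* M, w |= phi for a sentence phi (the valuation of variables is irrelevant) *)
Definition sat (M : CKModel) (w : W M) (f : form) : Prop :=
  sem M (fun _ _ => False) f w.

Inductive atom := ALe (x y : nat) | ARel (x y : nat).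
Definition lform : Type := (nat * form)%type.
Record sequent := mkSeq { atoms : list atom; lhs : list lform; rhs : list lform }.
(* sequent components are finite SETS, represented by lists up to membership *)

Inductive side := SL | SR.
Definition sform : Type := (side * nat * form)%type.

Definition extends {T : Type} (A B : list T) (P : T -> Prop) : Prop :=
  forall a, In a B <-> (In a A \/ P a).
Definition same {T : Type} (A B : list T) : Prop := extends A B (fun _ => False).

Definition occurs_label (y : nat) (c : sequent) : Prop :=
  (exists z, In (ALe y z) (atoms c) \/ In (ALe z y) (atoms c)
          \/ In (ARel y z) (atoms c) \/ In (ARel z y) (atoms c))
  \/ (exists f, In (y, f) (lhs c) \/ In (y, f) (rhs c)).
Definition fresh (y : nat) (c : sequent) : Prop := ~ occurs_label y c.

Definition axiom (c : sequent) : Prop :=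
  exists x P, (In (x, FBot) (lhs c) \/ In (x, FProp P) (lhs c)) /\ In (x, FProp P) (rhs c).

(* rule phi0 c ps pr ms : c is the conclusion, ps the premises, pr the principal
   formula (if any) and ms the list (aligned with ps) of minor formulas. *)
Inductive rule (phi0 : form) : sequent -> list sequent -> option sform -> list (sform -> Prop) -> Prop :=
| r_pres c p x y a :
    In (ALe x y) (atoms c) -> In (x, a) (lhs c) ->
    same (atoms c) (atoms p) -> extends (lhs c) (lhs p) (fun l => l = (y, a)) ->
    same (rhs c) (rhs p) ->
    rule phi0 c [p] None [fun _ => False]
| r_trans c p x y z :
    In (ALe x y) (atoms c) -> In (ALe y z) (atoms c) ->
    extends (atoms c) (atoms p) (fun t => t = ALe x z) ->
    same (lhs c) (lhs p) -> same (rhs c) (rhs p) ->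
    rule phi0 c [p] None [fun _ => False]
| r_andL c p x a b :
    In (x, FAnd a b) (lhs c) ->
    same (atoms c) (atoms p) ->
    extends (lhs c) (lhs p) (fun l => l = (x, a) \/ l = (x, b)) ->
    same (rhs c) (rhs p) ->
    rule phi0 c [p] (Some (SL, x, FAnd a b))
      [fun s => s = (SL, x, a) \/ s = (SL, x, b)]
| r_andR c p1 p2 x a b :
    In (x, FAnd a b) (rhs c) ->
    same (atoms c) (atoms p1) -> same (lhs c) (lhs p1) ->
    extends (rhs c) (rhs p1) (fun l => l = (x, a)) ->
    same (atoms c) (atoms p2) -> same (lhs c) (lhs p2) ->
    extends (rhs c) (rhs p2) (fun l => l = (x, b)) ->
    rule phi0 c [p1; p2] (Some (SR, x, FAnd a b))
      [fun s => s = (SR, x, a); fun s => s = (SR, x, b)]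
| r_orL c p1 p2 x a b :
    In (x, FOr a b) (lhs c) ->
    same (atoms c) (atoms p1) -> extends (lhs c) (lhs p1) (fun l => l = (x, a)) ->
    same (rhs c) (rhs p1) ->
    same (atoms c) (atoms p2) -> extends (lhs c) (lhs p2) (fun l => l = (x, b)) ->
    same (rhs c) (rhs p2) ->
    rule phi0 c [p1; p2] (Some (SL, x, FOr a b))
      [fun s => s = (SL, x, a); fun s => s = (SL, x, b)]
| r_orR c p x a b :
    In (x, FOr a b) (rhs c) ->
    same (atoms c) (atoms p) -> same (lhs c) (lhs p) ->
    extends (rhs c) (rhs p) (fun l => l = (x, a) \/ l = (x, b)) ->
    rule phi0 c [p] (Some (SR, x, FOr a b))
      [fun s => s = (SR, x, a) \/ s = (SR, x, b)]
| r_impL c p1 p2 x a b :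
    In (x, FImp a b) (lhs c) ->
    same (atoms c) (atoms p1) -> same (lhs c) (lhs p1) ->
    extends (rhs c) (rhs p1) (fun l => l = (x, a)) ->
    same (atoms c) (atoms p2) -> extends (lhs c) (lhs p2) (fun l => l = (x, b)) ->
    same (rhs c) (rhs p2) ->
    rule phi0 c [p1; p2] (Some (SL, x, FImp a b))
      [fun s => s = (SR, x, a); fun s => s = (SL, x, b)]
| r_impR c p x y a b :
    In (x, FImp a b) (rhs c) -> fresh y c ->
    extends (atoms c) (atoms p) (fun t => t = ALe x y) ->
    extends (lhs c) (lhs p) (fun l => l = (y, a)) ->
    extends (rhs c) (rhs p) (fun l => l = (y, b)) ->
    rule phi0 c [p] (Some (SR, x, FImp a b))
      [fun s => s = (SL, y, a) \/ s = (SR, y, b)]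
| r_boxL c p x a :
    In (x, FBox a) (lhs c) ->
    same (atoms c) (atoms p) ->
    extends (lhs c) (lhs p) (fun l => exists y, l = (y, a) /\ In (ARel x y) (atoms c)) ->
    same (rhs c) (rhs p) ->
    rule phi0 c [p] (Some (SL, x, FBox a))
      [fun s => exists y, s = (SL, y, a) /\ In (ARel x y) (atoms c)]
| r_boxR c p x y z a :
    In (x, FBox a) (rhs c) -> fresh y c -> fresh z c -> y <> z ->
    extends (atoms c) (atoms p) (fun t => t = ALe x y \/ t = ARel y z) ->
    same (lhs c) (lhs p) ->
    extends (rhs c) (rhs p) (fun l => l = (z, a)) ->
    rule phi0 c [p] (Some (SR, x, FBox a)) [fun s => s = (SR, z, a)]
| r_diaL c p x y a :
    In (x, FDia a) (lhs c) -> fresh y c ->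
    extends (atoms c) (atoms p) (fun t => t = ARel x y) ->
    extends (lhs c) (lhs p) (fun l => l = (y, a)) ->
    same (rhs c) (rhs p) ->
    rule phi0 c [p] (Some (SL, x, FDia a)) [fun s => s = (SL, y, a)]
| r_diaR c p x y a :
    In (x, FDia a) (rhs c) -> fresh y c ->
    extends (atoms c) (atoms p) (fun t => t = ALe x y) ->
    same (lhs c) (lhs p) ->
    extends (rhs c) (rhs p) (fun l => l = (y, FLDia a)) ->
    rule phi0 c [p] (Some (SR, x, FDia a)) [fun s => s = (SR, y, FLDia a)]
| r_ldiaR c p x a :
    In (x, FLDia a) (rhs c) ->
    same (atoms c) (atoms p) -> same (lhs c) (lhs p) ->
    extends (rhs c) (rhs p) (fun l => exists y, l = (y, a) /\ In (ARel x y) (atoms c)) ->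
    rule phi0 c [p] (Some (SR, x, FLDia a))
      [fun s => exists y, s = (SR, y, a) /\ In (ARel x y) (atoms c)]
| r_fixL c p x e X b :
    binds phi0 X e b -> In (x, FFix e X b) (lhs c) ->
    same (atoms c) (atoms p) -> extends (lhs c) (lhs p) (fun l => l = (x, b)) ->
    same (rhs c) (rhs p) ->
    rule phi0 c [p] (Some (SL, x, FFix e X b)) [fun s => s = (SL, x, b)]
| r_fixR c p x e X b :
    binds phi0 X e b -> In (x, FFix e X b) (rhs c) ->
    same (atoms c) (atoms p) -> same (lhs c) (lhs p) ->
    extends (rhs c) (rhs p) (fun l => l = (x, b)) ->
    rule phi0 c [p] (Some (SR, x, FFix e X b)) [fun s => s = (SR, x, b)]
| r_regenL c p x e X b :
    binds phi0 X e b -> In (x, FVar X) (lhs c) ->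
    same (atoms c) (atoms p) -> extends (lhs c) (lhs p) (fun l => l = (x, b)) ->
    same (rhs c) (rhs p) ->
    rule phi0 c [p] (Some (SL, x, FVar X)) [fun s => s = (SL, x, b)]
| r_regenR c p x e X b :
    binds phi0 X e b -> In (x, FVar X) (rhs c) ->
    same (atoms c) (atoms p) -> same (lhs c) (lhs p) ->
    extends (rhs c) (rhs p) (fun l => l = (x, b)) ->
    rule phi0 c [p] (Some (SR, x, FVar X)) [fun s => s = (SR, x, b)].

(* nodes are addresses (lists of child indices); each node carries its sequent
   and, for inner nodes, the rule instance applied (principal / minor formulas). *)
Record PreProof (phi0 : form) := {
  node : list nat -> Prop;
  seqt : list nat -> sequent;
  nchild : list nat -> nat;
  princ : list nat -> option sform;
  minors : list nat -> list (sform -> Prop);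
  node_root : node [];
  node_child : forall a i, node a -> (node (a ++ [i]) <-> i < nchild a);
  node_parent : forall a i, node (a ++ [i]) -> node a;
  node_step : forall a, node a ->
     (nchild a = 0 /\ axiom (seqt a)) \/
     (0 < nchild a /\
      rule phi0 (seqt a) (map (fun i => seqt (a ++ [i])) (seq 0 (nchild a)))
           (princ a) (minors a))
}.
Arguments node {phi0}. Arguments seqt {phi0}. Arguments nchild {phi0}.
Arguments princ {phi0}. Arguments minors {phi0}.

Definition root_is {phi0} (P : PreProof phi0) (x : nat) (phi : form) : Prop :=
  same (atoms (seqt P [])) [] /\ same (lhs (seqt P [])) [] /\
  same (rhs (seqt P [])) [(x, phi)].

Definition branch (f : nat -> nat) (n : nat) : list nat := map f (seq 0 n).
Definition is_branch {phi0} (P : PreProof phi0) (f : nat -> nat) : Prop :=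
  forall n, node P (branch f n).

Definition in_sequent (c : sequent) (s : sform) : Prop :=
  match s with
  | (SL, x, g) => In (x, g) (lhs c)
  | (SR, x, g) => In (x, g) (rhs c)
  end.

Definition minor_at {phi0} (P : PreProof phi0) (f : nat -> nat) (i : nat) (s' : sform) : Prop :=
  nth (f i) (minors P (branch f i)) (fun _ => False) s'.

Definition is_trace {phi0} (P : PreProof phi0) (f : nat -> nat) (t : nat -> sform) : Prop :=
  (forall i, in_sequent (seqt P (branch f i)) (t i)) /\
  (forall i, t (S i) = t i \/
             (princ P (branch f i) = Some (t i) /\ minor_at P f i (t (S i)))).

Definition regen_at {phi0} (P : PreProof phi0) (f : nat -> nat) (t : nat -> sform)
  (s : side) (X : nat) (i : nat) : Prop :=
  exists x, t i = (s, x, FVar X) /\ princ P (branch f i) = Some (t i) /\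
            minor_at P f i (t (S i)).

Definition inf_often (Q : nat -> Prop) : Prop := forall n, exists i, n <= i /\ Q i.

Definition regen_inf {phi0} (P : PreProof phi0) f t (s : side) (X : nat) : Prop :=
  inf_often (regen_at P f t s X).
Definition any_regen_inf {phi0} (P : PreProof phi0) f t (X : nat) : Prop :=
  regen_inf P f t SL X \/ regen_inf P f t SR X.

Definition progressing {phi0} (P : PreProof phi0) f t : Prop :=
  exists X e b, binds phi0 X e b /\ any_regen_inf P f t X /\
    (forall Y e' b', binds phi0 Y e' b' -> any_regen_inf P f t Y ->
        subform (FFix e' Y b') (FFix e X b)) /\
    ((e = Nu /\ regen_inf P f t SR X) \/ (e = Mu /\ regen_inf P f t SL X)).

Definition is_proof {phi0} (P : PreProof phi0) : Prop :=
  forall f, is_branch P f -> exists t, is_trace P f t /\ progressing P f t.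

From Stdlib Require Import List Arith Lia Classical FunctionalExtensionality PropExtensionality ClassicalEpsilon.
Import ListNotations.

(* Suppose [M, w] refutes [phi]. Annotate every fixed point whose unfolding counts as progress
   ([mu] on the left, [nu] on the right) by an approximant, i.e. a stage of the transfinite
   iteration of its operator, and order annotations lexicographically along the binders of
   [phi] in preorder; this order is well founded. Every formula of a refuted sequent is
   refuted under a least annotation. Each rule has a premise that is again refuted, for an
   extension of the valuation of world variables, and along a trace the least annotation,
   restricted to the binders up to a fixed [X], does not increase once the trace stays inside
   the body of [X], and strictly decreases whenever [X] is regenerated. Following refuted
   premises gives an infinite branch. On a progressing trace the outermost variable [X]
   regenerated infinitely often is progressive and all later regenerations happen inside its
   body, so the restricted annotations descend forever: a contradiction. *)

Section Approximants.
Variable T : Type.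

Definition incl (A B : T -> Prop) : Prop := forall w, A w -> B w.
Definition strict_incl (A B : T -> Prop) : Prop := incl A B /\ ~ incl B A.

Lemma incl_antisym (A B : T -> Prop) : incl A B -> incl B A -> A = B.
Proof.
  intros H1 H2. apply functional_extensionality; intro w.
  apply propositional_extensionality; split; auto.
Qed.

Variable op : (T -> Prop) -> T -> Prop.
Hypothesis op_mono : forall A B, incl A B -> incl (op A) (op B).

(* The approximants op^alpha(empty) of the least fixed point, without ordinals:
   closing under arbitrary unions of images. *)
Inductive approx : (T -> Prop) -> Prop :=
| approx_sup (S : (T -> Prop) -> Prop) :
    (forall A, S A -> approx A) -> approx (fun w => exists A, S A /\ op A w).

Lemma approx_incl_op D : approx D -> incl D (op D).
Proof.
  induction 1 as [S HS IH]. intros w [A [HA Hw]]. eapply op_mono; [|exact Hw].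
  intros u Hu. exists A; split; auto. apply IH; auto.
Qed.

Lemma approx_empty : approx (fun _ => False).
Proof.
  replace (fun _ : T => False) with (fun w => exists A, (fun _ : T -> Prop => False) A /\ op A w).
  - constructor. intros A [].
  - apply incl_antisym; intros w H; [destruct H as [A [[] _]] | destruct H].
Qed.

Lemma approx_cases A : approx A -> forall B, approx B -> incl B A \/ incl (op A) B.
Proof.
  induction 1 as [SA HSA IH]. intros B [SB HSB].
  destruct (classic (exists C, SB C /\ incl (fun w => exists A, SA A /\ op A w) C))
    as [[C [HC Hs]]|Hn].
  - right. intros w Hw. exists C; split; auto. eapply op_mono; eauto.
  - left. intros w [C [HC Hw]].
    destruct (classic (exists D, SA D /\ incl C D)) as [[D [HD HCD]]|Hn2].
    + exists D; split; auto. eapply op_mono; eauto.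
    + exfalso. apply Hn. exists C; split; auto.
      intros u [D [HD Hu]].
      destruct (IH D HD C (HSB C HC)) as [H1|H2].
      * exfalso. apply Hn2. exists D; auto.
      * apply H2; auto.
Qed.

Lemma approx_total A B : approx A -> approx B -> incl A B \/ incl B A.
Proof.
  intros HA HB. destruct (approx_cases A HA B HB) as [H|H]; auto.
  left. intros w Hw. apply H. apply approx_incl_op; auto.
Qed.

Lemma approx_below D : approx D -> forall w, D w ->
  exists B, approx B /\ strict_incl B D /\ op B w.
Proof.
  induction 1 as [S HS IH]. intros w [A [HA Hw]].
  assert (HAsub : incl A (fun w => exists A, S A /\ op A w)).
  { intros u Hu. exists A; split; auto. apply approx_incl_op; auto. }
  destruct (classic (incl (fun w => exists A, S A /\ op A w) A)) as [Hc|Hc].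
  - destruct (IH A HA w (Hc w (ex_intro _ A (conj HA Hw)))) as [B [HB [[H1 H2] H3]]].
    exists B; repeat split; auto.
    + intros u Hu. apply HAsub, H1, Hu.
    + intro Hs. apply H2. intros u Hu. apply Hs, HAsub, Hu.
  - exists A; repeat split; auto.
Qed.

Definition approx_lt (B A : T -> Prop) : Prop := approx B /\ strict_incl B A.

Lemma approx_wf A : approx A -> Acc approx_lt A.
Proof.
  induction 1 as [S HS IH]. constructor.
  intros B [HB [HBA HnAB]].
  destruct (classic (exists D, S D /\ incl B D)) as [[D [HD HBD]]|Hn].
  - destruct (classic (incl D B)) as [HDB|HnDB].
    + constructor. intros C [HC [HCB HnBC]]. apply Acc_inv with (x := D); auto.
      repeat split; auto.
      * intros u Hu; apply HBD, HCB, Hu.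
      * intro Hs. apply HnBC. intros u Hu. apply Hs, HBD, Hu.
    + apply Acc_inv with (x := D); auto. repeat split; auto.
  - exfalso. apply HnAB. intros w [D [HD Hw]].
    destruct (approx_cases D (HS D HD) B HB) as [H1|H2].
    + exfalso; apply Hn; exists D; auto.
    + apply H2; auto.
Qed.

Lemma lfp_approx w :
  (forall A : T -> Prop, (forall u, op A u -> A u) -> A w) -> exists D, approx D /\ op D w.
Proof.
  intros H. set (top := fun w => exists A, approx A /\ op A w).
  apply (H top). intros u Hu. exists top; split; auto. constructor; auto.
Qed.

Variable le : T -> T -> Prop.
Definition upclosed (A : T -> Prop) : Prop := forall u v, le u v -> A u -> A v.

Lemma approx_upclosed :
  (forall A, upclosed A -> upclosed (op A)) -> forall D, approx D -> upclosed D.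
Proof.
  intros Hop D. induction 1 as [S HS IH].
  intros u v Huv [A [HA Hu]]. exists A; split; auto. eapply Hop; eauto.
Qed.

End Approximants.

Arguments incl {T}. Arguments strict_incl {T}. Arguments upclosed {T}.

Section CoApproximants.
Variable T : Type.
Variable op : (T -> Prop) -> T -> Prop.
Hypothesis op_mono : forall A B, incl A B -> incl (op A) (op B).

Definition dual_op (A : T -> Prop) : T -> Prop := fun w => ~ op (fun u => ~ A u) w.

Lemma dual_op_mono A B : incl A B -> incl (dual_op A) (dual_op B).
Proof.
  intros H w Hw Hc. apply Hw. eapply op_mono; [|exact Hc].
  intros u Hu Hu'. apply Hu, H, Hu'.
Qed.

(* The approximants of the greatest fixed point, from above. *)
Definition coapprox (U : T -> Prop) : Prop :=
  exists D, approx T dual_op D /\ U = (fun w => ~ D w).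

Lemma coapprox_full : coapprox (fun _ => True).
Proof.
  exists (fun _ => False); split; [apply approx_empty|].
  apply incl_antisym; intros w H; auto.
Qed.

Lemma coapprox_above U : coapprox U -> forall w, ~ U w ->
  exists U', coapprox U' /\ strict_incl U U' /\ ~ op U' w.
Proof.
  intros [D [HD ->]] w Hw. apply NNPP in Hw.
  destruct (approx_below T dual_op dual_op_mono D HD w Hw) as [B [HB [[H1 H2] H3]]].
  exists (fun u => ~ B u). repeat split; [exists B; auto| | |exact H3].
  - intros u Hu Hb. apply Hu, H1, Hb.
  - intro Hs. apply H2. intros u Hu. apply NNPP. intro Hb. exact (Hs u Hb Hu).
Qed.

Lemma coapprox_total U1 U2 : coapprox U1 -> coapprox U2 -> incl U1 U2 \/ incl U2 U1.
Proof.
  intros [D1 [H1 ->]] [D2 [H2 ->]].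
  destruct (approx_total T dual_op dual_op_mono D1 D2 H1 H2) as [H|H]; [right|left];
  intros u Hu Hd; apply Hu, H, Hd.
Qed.

Definition coapprox_gt (U' U : T -> Prop) : Prop := coapprox U' /\ strict_incl U U'.

Lemma coapprox_wf U : coapprox U -> Acc coapprox_gt U.
Proof.
  intros [D [HD ->]]. pose proof (approx_wf T dual_op dual_op_mono D HD) as Hacc.
  clear HD. induction Hacc as [D _ IH]. constructor.
  intros U' [[D' [HD' ->]] [H1 H2]]. apply IH. repeat split; auto.
  - intros u Hu. apply NNPP. intro Hn. exact (H1 u Hn Hu).
  - intro Hs. apply H2. intros u Hu Hd. apply Hu, Hs, Hd.
Qed.

Lemma gfp_coapprox w : ~ (exists A : T -> Prop, (forall u, A u -> op A u) /\ A w) ->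
  exists U, coapprox U /\ ~ op U w.
Proof.
  intros H. destruct (lfp_approx T dual_op w) as [D [HD HDw]].
  - intros A HA. apply NNPP. intro Hn. apply H. exists (fun u => ~ A u). split; auto.
    intros u Hu. apply NNPP. intro Hc. apply Hu, HA, Hc.
  - exists (fun u => ~ D u). split; [exists D; auto|exact HDw].
Qed.

Variable le : T -> T -> Prop.

Lemma coapprox_upclosed :
  (forall A, upclosed le A -> upclosed le (op A)) -> forall U, coapprox U -> upclosed le U.
Proof.
  intros Hop U [D [HD ->]].
  assert (Hd : upclosed (fun u v => le v u) D).
  { apply (approx_upclosed T dual_op (fun u v => le v u)); auto.
    intros A HA u v Huv Hu Hc. apply Hu.
    assert (Hup : upclosed le (fun u => ~ A u)) by (intros a b Hab Ha Hb; apply Ha; eapply HA; eauto).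
    apply (Hop _ Hup v u Huv Hc). }
  intros u v Huv Hu Hv. apply Hu. eapply Hd; eauto.
Qed.

End CoApproximants.

Section Syntax.

Fixpoint form_size (f : form) : nat :=
  match f with
  | FProp _ | FBot | FVar _ => 1
  | FAnd a b | FOr a b | FImp a b => S (form_size a + form_size b)
  | FBox a | FDia a | FLDia a | FFix _ _ a => S (form_size a)
  end.

Lemma subform_refl f : subform f f.
Proof. destruct f; simpl; auto. Qed.

Lemma subform_size f g : subform g f -> form_size g <= form_size f.
Proof.
  revert g; induction f; simpl; intros g H; destruct H as [H|H]; subst; simpl; auto;
  try contradiction;
  try (destruct H as [H|H]; [apply IHf1 in H|apply IHf2 in H]; lia);
  apply IHf in H; lia.
Qed.

Lemma subform_trans f g h : subform g f -> subform h g -> subform h f.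
Proof.
  revert g h; induction f; simpl; intros g h H1 H2; destruct H1 as [H1|H1]; subst; auto;
  try contradiction;
  try (destruct H1 as [H1|H1]; right; [left; eapply IHf1|right; eapply IHf2]; eauto);
  right; eapply IHf; eauto.
Qed.

Lemma subform_fix_body e X a : subform a (FFix e X a).
Proof. simpl; right; apply subform_refl. Qed.

Lemma mu_form_subform f g : mu_form f -> subform g f -> mu_form g.
Proof.
  revert g; induction f; simpl; intros g Hm H; destruct H as [H|H]; subst; simpl; auto;
  try contradiction; try tauto;
  try (destruct Hm; destruct H as [H|H]; [eapply IHf1|eapply IHf2]; eauto);
  try (eapply IHf; eauto; fail); destruct Hm as [_ Hm]; eapply IHf; eauto.
Qed.

Definition binder := (eta * nat * form)%type.
Definition binder_name (en : binder) : nat := let '(_, X, _) := en in X.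
Definition binder_names (l : list binder) : list nat := map binder_name l.

Fixpoint binders (f : form) : list binder :=
  match f with
  | FProp _ | FBot | FVar _ => []
  | FAnd a b | FOr a b | FImp a b => binders a ++ binders b
  | FBox a | FDia a | FLDia a => binders a
  | FFix e X a => (e, X, a) :: binders a
  end.

Lemma In_binders f e X a : In (e, X, a) (binders f) <-> subform (FFix e X a) f.
Proof.
  revert e X a; induction f; simpl; intros e0 X0 a0;
  try (rewrite in_app_iff, IHf1, IHf2;
       split; [intro H; right; exact H|intros [H|H]; [discriminate|exact H]]);
  try (rewrite IHf; split; [intro H; right; exact H|intros [H|H]; [discriminate|exact H]]);
  try (split; [intros []|intros [H|[]]; discriminate]).
  rewrite IHf; split; intros [H|H]; auto; inversion H; subst; auto.
Qed.

Lemma count_occ_binder_names f X :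
  count_occ Nat.eq_dec (binder_names (binders f)) X = count_binders X f.
Proof.
  revert X; induction f; intros X0; simpl; auto;
  try (unfold binder_names in *; rewrite map_app, count_occ_app, IHf1, IHf2; auto).
  unfold binder_names in *; simpl. rewrite IHf.
  destruct (Nat.eq_dec X X0) as [->|Hn].
  - rewrite Nat.eqb_refl; auto.
  - apply Nat.eqb_neq in Hn; rewrite Hn; auto.
Qed.

Lemma well_bounded_NoDup f : well_bounded f -> NoDup (binder_names (binders f)).
Proof.
  intros H. apply (NoDup_count_occ' Nat.eq_dec). intros X HX.
  apply (count_occ_In Nat.eq_dec) in HX.
  rewrite count_occ_binder_names in *. specialize (H X). lia.
Qed.

Lemma count_binders_subform f e Y a : subform (FFix e Y a) f -> count_binders Y f >= 1.
Proof.
  revert e Y a; induction f; simpl; intros e0 Y a H; destruct H as [H|H];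
  try discriminate; try contradiction;
  try (destruct H as [H|H]; [apply IHf1 in H|apply IHf2 in H]; lia);
  try (apply IHf in H; lia).
  inversion H; subst; rewrite Nat.eqb_refl; lia.
Qed.

Lemma binders_split f e X a : subform (FFix e X a) f ->
  exists l1 l2, binders f = l1 ++ (e, X, a) :: binders a ++ l2.
Proof.
  revert e X a; induction f; simpl; intros e0 X0 a0 H; destruct H as [H|H];
  try discriminate; try contradiction.
  1-3: destruct H as [H|H];
    [ destruct (IHf1 _ _ _ H) as [l1 [l2 E]]; exists l1, (l2 ++ binders f2)
    | destruct (IHf2 _ _ _ H) as [l1 [l2 E]]; exists (binders f1 ++ l1), l2 ];
    rewrite E; rewrite <- !app_assoc; simpl; rewrite <- ?app_assoc; reflexivity.
  1-3: apply IHf; auto.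
  - inversion H; subst. exists [], []. rewrite app_nil_r; auto.
  - destruct (IHf _ _ _ H) as [l1 [l2 E]]. exists ((e, X, f) :: l1), l2. rewrite E; auto.
Qed.

Lemma occurs_free_subform f g Y : subform g f -> occurs_free Y g ->
  occurs_free Y f \/ exists e b, subform (FFix e Y b) f /\ subform g b.
Proof.
  revert g; induction f; simpl; intros g H Hf; destruct H as [H|H]; subst; auto;
  try contradiction.
  1-3: destruct H as [H|H]; [destruct (IHf1 _ H Hf)|destruct (IHf2 _ H Hf)]; auto;
       destruct H0 as [e [b [H1 H2]]]; right; exists e, b; auto.
  1-3: destruct (IHf _ H Hf) as [H0|[e0 [b [H1 H2]]]]; auto; right; exists e0, b; auto.
  destruct (IHf _ H Hf) as [H0|[e0 [b [H1 H2]]]].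
  - destruct (Nat.eq_dec X Y) as [->|Hn]; auto.
    right. exists e, f. split; [left|]; auto.
  - right; exists e0, b; auto.
Qed.

End Syntax.

Lemma NoDup_map_inj {A B} (g : A -> B) l x y :
  NoDup (map g l) -> In x l -> In y l -> g x = g y -> x = y.
Proof.
  induction l; simpl; intros Hn Hx Hy Hg; [contradiction|].
  inversion Hn; subst.
  destruct Hx as [->|Hx]; destruct Hy as [->|Hy]; auto.
  - exfalso; apply H1; rewrite Hg; apply in_map; auto.
  - exfalso; apply H1; rewrite <- Hg; apply in_map; auto.
Qed.

Lemma NoDup_app_disjoint {A} (l1 l2 : list A) x :
  NoDup (l1 ++ l2) -> In x l1 -> In x l2 -> False.
Proof.
  induction l1; simpl; intros Hn H1 H2; [contradiction|].
  inversion Hn; subst. destruct H1 as [->|H1].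
  - apply H3. apply in_or_app; auto.
  - eapply IHl1; eauto.
Qed.

Lemma dependent_choice {A : Type} (Inv : A -> Prop) (R : A -> A -> Prop) :
  (forall s, Inv s -> exists s', Inv s' /\ R s s') ->
  forall s0, Inv s0 -> exists g : nat -> A, g 0 = s0 /\ forall n, Inv (g n) /\ R (g n) (g (S n)).
Proof.
  intros Hstep s0 H0.
  pose (next := fun s : {s | Inv s} =>
          let H := constructive_indefinite_description _ (Hstep _ (proj2_sig s)) in
          exist Inv (proj1_sig H) (proj1 (proj2_sig H))).
  pose (g := fun n => nat_rect (fun _ => {s | Inv s}) (exist Inv s0 H0) (fun _ => next) n).
  exists (fun n => proj1_sig (g n)). split; [reflexivity|]. intros n.
  split; [apply proj2_sig|]. simpl. unfold next.
  destruct (constructive_indefinite_description _ _) as [s' Hs']. exact (proj2 Hs').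
Qed.

Lemma Acc_no_descent {A : Type} (R : A -> A -> Prop) (Q : A -> Prop) :
  (forall a, Q a -> exists b, Q b /\ R b a) -> forall a, Acc R a -> ~ Q a.
Proof.
  intros Hdesc a Hacc. induction Hacc as [a _ IH]. intros Ha.
  destruct (Hdesc a Ha) as [b [Hb Hba]]. exact (IH b Hba Hb).
Qed.

Section Sides.

Definition flip_side (s : side) : side := match s with SL => SR | SR => SL end.

(* [sided sd s g]: placed on side [s] of a sequent, every occurrence of a variable [Y]
   in [g], and every binder of [Y], sits on side [sd Y] (antecedents of [->] flip sides). *)
Fixpoint sided (sd : nat -> side) (s : side) (g : form) : Prop :=
  match g with
  | FVar Y => sd Y = s
  | FProp _ | FBot => True
  | FAnd a b | FOr a b => sided sd s a /\ sided sd s b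
  | FImp a b => sided sd (flip_side s) a /\ sided sd s b
  | FBox a | FDia a | FLDia a => sided sd s a
  | FFix _ Y a => sd Y = s /\ sided sd s a
  end.

Fixpoint binder_side (s : side) (g : form) (Y : nat) : option side :=
  match g with
  | FFix _ Z a => if Nat.eqb Z Y then Some s else binder_side s a Y
  | FAnd a b | FOr a b =>
      match binder_side s a Y with Some r => Some r | None => binder_side s b Y end
  | FImp a b =>
      match binder_side (flip_side s) a Y with Some r => Some r | None => binder_side s b Y end
  | FBox a | FDia a | FLDia a => binder_side s a Y
  | _ => None
  end.

Lemma binder_side_count g s Y : binder_side s g Y <> None -> count_binders Y g >= 1.
Proof.
  revert s; induction g; simpl; intros s H; try congruence;
  try (destruct (binder_side _ g1 Y) eqn:E;
       [assert (count_binders Y g1 >= 1) by (eapply IHg1; rewrite E; congruence); lia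
       |assert (count_binders Y g2 >= 1) by (eapply IHg2; eauto); lia]);
  try (eapply IHg; eauto).
  destruct (Nat.eqb X Y); [lia|].
  assert (count_binders Y g >= 1) by (eapply IHg; eauto); lia.
Qed.

(* Positivity of bound variables is what makes the sides of a well-bounded formula consistent. *)
Lemma sided_binder_side sd g s :
  mu_form g -> well_bounded g ->
  (forall Z r, binder_side s g Z = Some r -> sd Z = r) ->
  (forall Y, occurs_free Y g -> (sd Y = s -> pos Y g) /\ (sd Y <> s -> neg Y g)) ->
  sided sd s g.
Proof.
  unfold well_bounded; revert s; induction g; simpl; intros s Hmu Hcb Hb Hf; auto.
  1: { destruct (Hf X eq_refl) as [_ H2].
        destruct (sd X), s; auto; exfalso; apply (H2 ltac:(discriminate)); auto. }
  1-3: destruct Hmu; split;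
    [ apply IHg1; auto;
      [ intro X; specialize (Hcb X); lia
      | intros Z r E; apply Hb; rewrite E; auto
      | intros Y HY; destruct (Hf Y (or_introl HY)) as [H1 H2]; split; intros H3;
        first [ tauto | apply H2; destruct (sd Y), s; simpl in *; congruence
              | apply H1; destruct (sd Y), s; simpl in *; congruence ] ]
    | apply IHg2; auto;
      [ intro X; specialize (Hcb X); lia
      | intros Z r E; apply Hb;
        match goal with |- match binder_side ?s' ?h Z with _ => _ end = _ =>
          destruct (binder_side s' h Z) eqn:E1; auto; exfalso;
          assert (count_binders Z h >= 1) by (eapply binder_side_count; rewrite E1; congruence)
        end;
        assert (count_binders Z g2 >= 1) by (eapply binder_side_count; rewrite E; congruence);
        specialize (Hcb Z); lia
      | intros Y HY; destruct (Hf Y (or_intror HY)); split; intros; tauto ] ].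
  - contradiction.
  - destruct Hmu as [Hpos Hmu]. split.
    + apply Hb. rewrite Nat.eqb_refl; auto.
    + apply IHg; auto.
      * intro Y. specialize (Hcb Y). destruct (Nat.eqb X Y); lia.
      * intros Z r E. apply Hb. destruct (Nat.eqb X Z) eqn:E1; auto.
        apply Nat.eqb_eq in E1; subst. exfalso.
        assert (count_binders Z g >= 1) by (eapply binder_side_count; rewrite E; congruence).
        specialize (Hcb Z); rewrite Nat.eqb_refl in Hcb; lia.
      * intros Y HY. destruct (Nat.eq_dec X Y) as [<-|Hn].
        -- assert (sd X = s) by (apply Hb; rewrite Nat.eqb_refl; auto).
           split; intro; [auto|congruence].
        -- destruct (Hf Y (conj Hn HY)) as [H1 H2]; split; intro H3.
           ++ destruct (H1 H3); [congruence|auto].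
           ++ destruct (H2 H3); [congruence|auto].
Qed.

Lemma sided_subform sd g s h : sided sd s g -> subform h g -> exists s', sided sd s' h.
Proof.
  revert s; induction g; intros s Ho Hs; destruct Hs as [Hs|Hs]; subst;
  try (exists s; exact Ho); simpl in Ho; try contradiction.
  1-3: destruct Ho; destruct Hs as [Hs|Hs]; [eapply IHg1|eapply IHg2]; eauto.
  1-3: eapply IHg; eauto.
  destruct Ho; eapply IHg; eauto.
Qed.

End Sides.

Section Semantics.
Variable M : CKModel.

Definition env := nat -> W M -> Prop.

Lemma upd_eq (rho : env) X A : upd rho X A X = A.
Proof. unfold upd; rewrite Nat.eqb_refl; auto. Qed.

Lemma upd_neq (rho : env) X A Y : Y <> X -> upd rho X A Y = rho Y.
Proof. intros H; unfold upd. apply Nat.eqb_neq in H; rewrite H; auto. Qed.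

Lemma upd_same (rho : env) X : upd rho X (rho X) = rho.
Proof.
  apply functional_extensionality; intro Y. unfold upd.
  destruct (Nat.eqb_spec Y X); subst; auto.
Qed.

Lemma sem_ext_iff g (r1 r2 : env) : (forall Y, occurs_free Y g -> r1 Y = r2 Y) ->
  forall w, sem M r1 g w <-> sem M r2 g w.
Proof.
  revert r1 r2; induction g; simpl; intros r1 r2 H w.
  - tauto.
  - rewrite H; auto. tauto.
  - tauto.
  - rewrite (IHg1 r1 r2), (IHg2 r1 r2); auto; tauto.
  - rewrite (IHg1 r1 r2), (IHg2 r1 r2); auto; tauto.
  - split; intros Hi v Hv; specialize (Hi v Hv);
    [rewrite <- (IHg1 r1 r2), <- (IHg2 r1 r2) | rewrite (IHg1 r1 r2), (IHg2 r1 r2)]; auto.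
  - split; intros Hi v u Hv Hu; specialize (Hi v u Hv Hu);
    [rewrite <- (IHg r1 r2)|rewrite (IHg r1 r2)]; auto.
  - split; intros Hi v Hv; destruct (Hi v Hv) as [u [Hu1 Hu2]]; exists u; split; auto;
    [rewrite <- (IHg r1 r2)|rewrite (IHg r1 r2)]; auto.
  - split; intros [u [Hu1 Hu2]]; exists u; split; auto;
    [rewrite <- (IHg r1 r2)|rewrite (IHg r1 r2)]; auto.
  - assert (HA : forall A u, sem M (upd r1 X A) g u <-> sem M (upd r2 X A) g u).
    { intros A u. apply IHg. intros Y HY. unfold upd. destruct (Nat.eqb_spec Y X); auto. }
    destruct e.
    + split; intros Hi A HAp; apply Hi; intros u Hu; apply HAp; apply HA; auto.
    + split; intros [A [HAp Hw]]; exists A; split; auto; intros u Hu; apply HA; auto.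
Qed.

Lemma sem_ext g (r1 r2 : env) : (forall Y, occurs_free Y g -> r1 Y = r2 Y) ->
  sem M r1 g = sem M r2 g.
Proof.
  intros H. apply functional_extensionality; intro w. apply propositional_extensionality.
  apply sem_ext_iff; auto.
Qed.

Definition env_le (r1 r2 : env) (g : form) : Prop := forall Y, r1 Y = r2 Y
  \/ (pos Y g /\ incl (r1 Y) (r2 Y)) \/ (neg Y g /\ incl (r2 Y) (r1 Y)).

Lemma sem_mono g r1 r2 : env_le r1 r2 g -> incl (sem M r1 g) (sem M r2 g).
Proof.
  revert r1 r2; induction g; simpl; intros r1 r2 H w Hw; auto.
  - destruct (H X) as [E|[[_ Hs]|[Hn _]]].
    + rewrite <- E; auto.
    + apply Hs; auto.
    + simpl in Hn; congruence.
  - destruct Hw as [H1 H2]; split; [eapply IHg1|eapply IHg2]; eauto;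
    intro Y; destruct (H Y) as [E|[[[Hp1 Hp2] Hs]|[[Hn1 Hn2] Hs]]]; auto.
  - destruct Hw as [H1|H2]; [left; eapply IHg1|right; eapply IHg2]; eauto;
    intro Y; destruct (H Y) as [E|[[[Hp1 Hp2] Hs]|[[Hn1 Hn2] Hs]]]; auto.
  - intros v Hv Ha. eapply IHg2; [|apply Hw; auto; eapply IHg1; [|exact Ha]];
    intro Y; destruct (H Y) as [E|[[[Hp1 Hp2] Hs]|[[Hn1 Hn2] Hs]]]; auto.
  - intros v u Hv Hu. eapply IHg; [|apply (Hw v u Hv Hu)].
    intro Y; destruct (H Y) as [E|[[Hp Hs]|[Hn Hs]]]; auto.
  - intros v Hv. destruct (Hw v Hv) as [u [Hu1 Hu2]]. exists u; split; auto.
    eapply IHg; [|exact Hu2].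
    intro Y; destruct (H Y) as [E|[[Hp Hs]|[Hn Hs]]]; auto.
  - destruct Hw as [u [Hu1 Hu2]]. exists u; split; auto.
    eapply IHg; [|exact Hu2].
    intro Y; destruct (H Y) as [E|[[Hp Hs]|[Hn Hs]]]; auto.
  - assert (HC : forall A, env_le (upd r1 X A) (upd r2 X A) g).
    { intros A Y. unfold upd. destruct (Nat.eqb_spec Y X) as [->|Hn]; auto.
      destruct (H Y) as [E|[[[Hp|Hp] Hs]|[[Hn'|Hn'] Hs]]]; auto; congruence. }
    destruct e.
    + intros A HAp. apply Hw. intros u Hu. apply HAp. eapply IHg; eauto.
    + destruct Hw as [A [HAp HA]]. exists A; split; auto. intros u Hu. eapply IHg; eauto.
Qed.

Definition fix_op (X : nat) (a : form) (rho : env) (A : W M -> Prop) : W M -> Prop :=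
  sem M (upd rho X A) a.

Lemma fix_op_mono X a rho : pos X a ->
  forall A B, incl A B -> incl (fix_op X a rho A) (fix_op X a rho B).
Proof.
  intros Hp A B Hs. apply sem_mono. intro Y. unfold upd.
  destruct (Nat.eqb_spec Y X) as [->|Hn]; auto.
Qed.

Lemma nu_unfold X b (rho : env) w : pos X b -> sem M rho (FFix Nu X b) w ->
  fix_op X b rho (sem M rho (FFix Nu X b)) w.
Proof.
  intros Hp [A [HA Hw]]. eapply (fix_op_mono X b rho Hp A); [|apply HA; auto].
  intros u Hu. exists A; split; auto.
Qed.

Lemma mu_fold X b (rho : env) w : pos X b ->
  fix_op X b rho (sem M rho (FFix Mu X b)) w -> sem M rho (FFix Mu X b) w.
Proof.
  intros Hp H A HA. apply HA. eapply (fix_op_mono X b rho Hp); [|exact H].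
  intros u Hu. apply Hu; auto.
Qed.

Definition persistent : (W M -> Prop) -> Prop := upclosed (wle M).

Lemma sem_persistent g (rho : env) : mu_form g -> (forall Y, persistent (rho Y)) ->
  persistent (sem M rho g).
Proof.
  revert rho; induction g; simpl; intros rho Hm Hr u v Huv Hu.
  - eapply V_mono; eauto.
  - eapply Hr; eauto.
  - eapply Wbot_le; eauto.
  - destruct Hm; destruct Hu; split; [eapply IHg1|eapply IHg2]; eauto.
  - destruct Hm; destruct Hu; [left; eapply IHg1|right; eapply IHg2]; eauto.
  - intros v' Hv'. apply Hu. eapply wle_trans; eauto.
  - intros v' u' Hv' Hu'. apply (Hu v' u'); auto. eapply wle_trans; eauto.
  - intros v' Hv'. apply Hu. eapply wle_trans; eauto.
  - contradiction.
  - destruct Hm as [Hp Hm].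
    assert (Hupd : forall A, persistent A -> forall Y, persistent (upd rho X A Y)).
    { intros A HA Y. unfold upd. destruct (Nat.eqb Y X); auto. }
    destruct e.
    + (* the persistent kernel of a prefixed point is again prefixed *)
      intros A HAp.
      set (Ai := fun u => forall v, wle M u v -> A v).
      assert (HAi : persistent Ai) by (intros a b Hab Ha c Hc; apply Ha; eapply wle_trans; eauto).
      assert (Hpre : forall u, sem M (upd rho X Ai) g u -> Ai u).
      { intros u0 Hu0 v0 Hv0. apply HAp.
        eapply (fix_op_mono X g rho Hp Ai A).
        - intros c Hc. apply Hc. apply wle_refl.
        - unfold fix_op. eapply IHg; eauto. }
      apply (Hu Ai Hpre v Huv).
    + (* the persistent closure of a postfixed point is again postfixed *)
      destruct Hu as [A [HAp HA]].
      set (Au := fun u => exists u0, A u0 /\ wle M u0 u).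
      assert (HAu : persistent Au)
        by (intros a b Hab [c [Hc1 Hc2]]; exists c; split; auto; eapply wle_trans; eauto).
      exists Au; split.
      * intros u0 [c [Hc1 Hc2]]. eapply IHg; eauto.
        eapply (fix_op_mono X g rho Hp A Au).
        -- intros d Hd; exists d; split; auto; apply wle_refl.
        -- apply HAp; auto.
      * exists u; split; auto.
Qed.

Lemma fix_op_persistent X a (rho : env) : mu_form a -> (forall Y, persistent (rho Y)) ->
  forall A, persistent A -> persistent (fix_op X a rho A).
Proof.
  intros. unfold fix_op. apply sem_persistent; auto.
  intro Y. unfold upd. destruct (Nat.eqb Y X); auto.
Qed.

End Semantics.

Section Soundness.
Variable phi0 : form.
Hypothesis Hmu : mu_form phi0.
Hypothesis Hwb : well_bounded phi0.
Hypothesis Hsent : sentence phi0.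

Definition side_of (Y : nat) : side :=
  match binder_side SR phi0 Y with Some s => s | None => SR end.

Lemma sided_phi0 : sided side_of SR phi0.
Proof.
  apply sided_binder_side; auto.
  - intros Z r E; unfold side_of; rewrite E; auto.
  - intros Y HY; exfalso; apply (Hsent Y HY).
Qed.

Lemma sided_binder X e a : binds phi0 X e a -> sided side_of (side_of X) a.
Proof.
  intros Hb. destruct (sided_subform _ _ _ _ sided_phi0 Hb) as [s' [H1 H2]].
  rewrite H1; auto.
Qed.

Lemma binds_unique X e a e' a' : binds phi0 X e a -> binds phi0 X e' a' -> e = e' /\ a = a'.
Proof.
  intros H1 H2. unfold binds in *. apply In_binders in H1; apply In_binders in H2.
  pose proof (NoDup_map_inj binder_name _ _ _ (well_bounded_NoDup _ Hwb) H1 H2 eq_refl) as E.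
  inversion E; auto.
Qed.

Lemma binds_mu_pos X e a : binds phi0 X e a -> mu_form a /\ pos X a.
Proof. intros H. pose proof (mu_form_subform _ _ Hmu H) as Hm. simpl in Hm; tauto. Qed.

Lemma binds_subform Z eZ aZ e Y b :
  binds phi0 Z eZ aZ -> subform (FFix e Y b) aZ -> binds phi0 Y e b.
Proof.
  intros H1 H2. unfold binds in *. eapply subform_trans; [exact H1|].
  eapply subform_trans; [apply subform_fix_body|exact H2].
Qed.

Lemma free_var_bound g Y : subform g phi0 -> occurs_free Y g ->
  exists e b, binds phi0 Y e b /\ subform g b.
Proof.
  intros Hs Hf. destruct (occurs_free_subform phi0 g Y Hs Hf) as [H|H]; auto.
  exfalso; apply (Hsent Y H).
Qed.

Lemma free_var_precedes l1 l2 e Y a X : binders phi0 = l1 ++ l2 -> In (e, Y, a) l1 ->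
  occurs_free X (FFix e Y a) -> In X (binder_names l1).
Proof.
  intros E HIn Hf.
  assert (HY : binds phi0 Y e a) by (apply In_binders; rewrite E; apply in_or_app; auto).
  destruct (free_var_bound _ _ HY Hf) as [eX [bX [HX Hsub]]].
  destruct (binders_split _ _ _ _ HX) as [L1 [L2 E2]].
  destruct (classic (In X (binder_names l1))) as [H|H]; auto. exfalso.
  rewrite E in E2. apply app_eq_app in E2.
  assert (HYb : In (e, Y, a) (binders bX)) by (apply In_binders; auto).
  pose proof (well_bounded_NoDup _ Hwb) as ND. rewrite E in ND. unfold binder_names in ND.
  rewrite map_app in ND.
  assert (Hdup : In (e, Y, a) l2 -> False).
  { intro H2. apply (NoDup_app_disjoint _ _ Y ND).
    - apply (in_map binder_name) in HIn; exact HIn.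
    - apply (in_map binder_name) in H2; exact H2. }
  destruct E2 as [l' [[E3 E4]|[E3 E4]]].
  - destruct l' as [|h l'].
    + simpl in E4. apply Hdup. rewrite <- E4. simpl; right. apply in_or_app; auto.
    + inversion E4; subst. apply H. unfold binder_names. rewrite map_app.
      apply in_or_app; right. simpl; auto.
  - apply Hdup. rewrite E4. apply in_or_app; right. simpl; right. apply in_or_app; auto.
Qed.

Definition binder_eta (Y : nat) : eta :=
  match find (fun en => Nat.eqb (binder_name en) Y) (binders phi0) with
  | Some (e, _, _) => e
  | None => Mu
  end.

Lemma binder_eta_binds Y e a : binds phi0 Y e a -> binder_eta Y = e.
Proof.
  intros Hb. unfold binder_eta.
  destruct (find (fun en => Nat.eqb (binder_name en) Y) (binders phi0))
    as [[[e' Y'] a']|] eqn:Ef.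
  - apply find_some in Ef. destruct Ef as [Hin Heq]. simpl in Heq.
    apply Nat.eqb_eq in Heq; subst.
    apply In_binders in Hin. destruct (binds_unique Y e' a' e a Hin Hb); auto.
  - exfalso. apply In_binders in Hb. eapply find_none in Ef; eauto. simpl in Ef.
    rewrite Nat.eqb_refl in Ef; discriminate.
Qed.

(** * Annotations *)

Variable M : CKModel.

(* The fixed points whose unfolding counts as progress of a trace: [mu] on the left,
   [nu] on the right. Only these are given approximants. *)
Definition progressive (e : eta) (Y : nat) : bool :=
  match e, side_of Y with Mu, SL | Nu, SR => true | _, _ => false end.

Fixpoint annot_env_from (tau : env M) (f : form) (rho : env M) : env M :=
  match f with
  | FFix e Y a =>
      annot_env_from tau a
        (upd rho Y (if progressive e Y then tau Y else sem M rho (FFix e Y a)))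
  | FAnd a b | FOr a b | FImp a b => annot_env_from tau b (annot_env_from tau a rho)
  | FBox a | FDia a | FLDia a => annot_env_from tau a rho
  | _ => rho
  end.

Definition annot_env (tau : env M) : env M := annot_env_from tau phi0 (fun _ _ => False).

Lemma annot_env_from_unbound tau f rho Z :
  count_binders Z f = 0 -> annot_env_from tau f rho Z = rho Z.
Proof.
  revert rho; induction f; simpl; intros rho H; auto;
  try (rewrite IHf2 by lia; rewrite IHf1 by lia; auto).
  rewrite IHf by (destruct (Nat.eqb X Z); lia).
  destruct (Nat.eqb_spec X Z); [lia|]. rewrite upd_neq; auto.
Qed.

Lemma annot_env_from_binder tau f rho : well_bounded f ->
  (forall Z, occurs_free Z f -> count_binders Z f = 0) ->
  forall e Y a, subform (FFix e Y a) f ->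
  annot_env_from tau f rho Y =
    if progressive e Y then tau Y else sem M (annot_env_from tau f rho) (FFix e Y a).
Proof.
  unfold well_bounded; revert rho.
  induction f; cbn [annot_env_from subform count_binders occurs_free] in *;
  intros rho Hc Hf e0 Y a0 Hs; destruct Hs as [Hs|Hs]; try discriminate; try contradiction.
  1-3: destruct Hs as [Hs|Hs];
    [ assert (HY1 := count_binders_subform _ _ _ _ Hs);
      assert (HY2 : count_binders Y f2 = 0) by (specialize (Hc Y); lia);
      rewrite annot_env_from_unbound by auto;
      rewrite (IHf1 rho) with (e := e0) (a := a0); auto;
      [ destruct (progressive e0 Y); auto;
        apply sem_ext; intros Z HZ;
        destruct (occurs_free_subform f1 _ Z Hs HZ) as [HZ1|[e1 [b1 [HZ1 _]]]];
        symmetry; apply annot_env_from_unbound;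
        [ specialize (Hf Z (or_introl HZ1)); lia
        | assert (HZ2 := count_binders_subform _ _ _ _ HZ1); specialize (Hc Z); lia ]
      | intro X; specialize (Hc X); lia
      | intros Z HZ; specialize (Hf Z (or_introl HZ)); lia ]
    | apply IHf2; auto;
      [ intro X; specialize (Hc X); lia
      | intros Z HZ; specialize (Hf Z (or_intror HZ)); lia ] ].
  1-3: apply IHf; auto.
  - inversion Hs; subst. rewrite annot_env_from_unbound.
    + rewrite upd_eq. destruct (progressive e X); auto.
      apply sem_ext. intros Z [HZ1 HZ2]. rewrite annot_env_from_unbound.
      * rewrite upd_neq by congruence; auto.
      * specialize (Hf Z (conj HZ1 HZ2)). destruct (Nat.eqb X Z); lia.
    + specialize (Hc X). rewrite Nat.eqb_refl in Hc. lia.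
  - apply IHf; auto.
    + intro Z; specialize (Hc Z); lia.
    + intros Z HZ. destruct (Nat.eq_dec X Z) as [<-|Hn].
      * specialize (Hc X); rewrite Nat.eqb_refl in Hc; lia.
      * specialize (Hf Z (conj Hn HZ)). destruct (Nat.eqb X Z); lia.
Qed.

Lemma annot_env_binder tau e Y a : binds phi0 Y e a ->
  annot_env tau Y = if progressive e Y then tau Y else sem M (annot_env tau) (FFix e Y a).
Proof.
  intros. apply annot_env_from_binder; auto.
  intros Z HZ; exfalso; apply (Hsent Z HZ).
Qed.

Lemma annot_env_from_agree (B : nat -> Prop) tau1 tau2 f rho1 rho2 :
  (forall e Y a, subform (FFix e Y a) f -> ~ B Y ->
     forall X, occurs_free X (FFix e Y a) -> ~ B X) ->
  (forall e Y a, subform (FFix e Y a) f -> ~ B Y -> progressive e Y = true -> tau1 Y = tau2 Y) ->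
  (forall X, ~ B X -> rho1 X = rho2 X) ->
  forall X, ~ B X -> annot_env_from tau1 f rho1 X = annot_env_from tau2 f rho2 X.
Proof.
  revert rho1 rho2; induction f; cbn [annot_env_from subform];
  intros rho1 rho2 Hcl Ht Hr X0 HX0; auto.
  1-3: apply IHf2; [intros e Y a H; eapply Hcl; right; right; exact H
                  | intros e Y a H; eapply Ht; right; right; exact H | | exact HX0];
       apply IHf1; [intros e Y a H; eapply Hcl; right; left; exact H
                  | intros e Y a H; eapply Ht; right; left; exact H | auto].
  1-3: apply IHf; [intros e Y a H; eapply Hcl; right; exact H
                  | intros e Y a H; eapply Ht; right; exact H | auto | exact HX0].
  apply IHf; [intros e0 Y a H; eapply Hcl; right; exact H
             | intros e0 Y a H; eapply Ht; right; exact H | | exact HX0].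
  intros Z HZ. unfold upd. destruct (Nat.eqb_spec Z X) as [->|Hn]; auto.
  destruct (progressive e X) eqn:Ep.
  - eapply Ht; eauto.
  - apply sem_ext. intros Z' HZ'. apply Hr. eapply Hcl; eauto.
Qed.

Lemma annot_env_agree (B : nat -> Prop) tau1 tau2 :
  (forall e Y a, binds phi0 Y e a -> ~ B Y -> forall X, occurs_free X (FFix e Y a) -> ~ B X) ->
  (forall e Y a, binds phi0 Y e a -> ~ B Y -> progressive e Y = true -> tau1 Y = tau2 Y) ->
  forall X, ~ B X -> annot_env tau1 X = annot_env tau2 X.
Proof. intros. unfold annot_env. eapply annot_env_from_agree; eauto. Qed.

Lemma annot_env_from_persistent tau f rho : mu_form f ->
  (forall e Y a, subform (FFix e Y a) f -> progressive e Y = true -> persistent M (tau Y)) ->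
  (forall Y, persistent M (rho Y)) -> forall Y, persistent M (annot_env_from tau f rho Y).
Proof.
  revert rho; induction f; simpl; intros rho Hm Ht Hr; auto;
  try (destruct Hm; apply IHf2; auto; [intros; eapply Ht; eauto|];
       apply IHf1; auto; intros; eapply Ht; eauto);
  try (apply IHf; auto; intros; eapply Ht; eauto).
  - contradiction.
  - destruct Hm as [Hp Hm]. apply IHf; auto; [intros; eapply Ht; eauto|].
    intros Z. unfold upd. destruct (Nat.eqb Z X); auto.
    destruct (progressive e X) eqn:Ep.
    + eapply Ht; eauto.
    + apply (sem_persistent M (FFix e X f)); simpl; auto.
Qed.

Definition stage (e : eta) (op : (W M -> Prop) -> W M -> Prop) (D : W M -> Prop) : Prop :=
  match e with Mu => approx (W M) op D | Nu => coapprox (W M) op D end.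

(* strictly closer to the bottom of the approximation *)
Definition stage_lt (e : eta) (D D' : W M -> Prop) : Prop :=
  match e with Mu => strict_incl D D' | Nu => strict_incl D' D end.

Definition stage_bot (e : eta) : W M -> Prop :=
  match e with Mu => fun _ => False | Nu => fun _ => True end.

Lemma stage_bot_stage e op : stage e op (stage_bot e).
Proof. destruct e; [apply approx_empty|apply coapprox_full]. Qed.

Lemma stage_bot_persistent e : persistent M (stage_bot e).
Proof. destruct e; simpl; intros u v _ H; auto. Qed.

Lemma stage_lt_trans e a b c : stage_lt e a b -> stage_lt e b c -> stage_lt e a c.
Proof.
  destruct e; simpl; intros [H1 H2] [H3 H4]; split; intros.
  - intros w Hw; auto.
  - intro Hs; apply H4. intros w Hw; apply H1, Hs, Hw.
  - intros w Hw; auto.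
  - intro Hs; apply H2. intros w Hw; apply H3, Hs, Hw.
Qed.

Lemma stage_lt_irrefl e a : ~ stage_lt e a a.
Proof. destruct e; simpl; intros [H1 H2]; auto. Qed.

Definition stage_below (e : eta) op (D' D : W M -> Prop) : Prop :=
  match e with Mu => approx_lt (W M) op D' D | Nu => coapprox_gt (W M) op D' D end.

Lemma stage_wf e op : (forall A B, incl A B -> incl (op A) (op B)) ->
  forall D, stage e op D -> Acc (stage_below e op) D.
Proof. destruct e; simpl; intros Hm D H; [apply approx_wf|apply coapprox_wf]; auto. Qed.

Lemma stage_trichotomy e op : (forall A B, incl A B -> incl (op A) (op B)) ->
  forall D1 D2, stage e op D1 -> stage e op D2 ->
  D1 = D2 \/ stage_lt e D1 D2 \/ stage_lt e D2 D1.
Proof.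
  intros Hm D1 D2 H1 H2.
  assert (Ht : incl D1 D2 \/ incl D2 D1).
  { destruct e; simpl in *; [apply (approx_total _ op)|apply (coapprox_total _ op)]; auto. }
  destruct (classic (incl D1 D2)) as [H12|H12]; destruct (classic (incl D2 D1)) as [H21|H21].
  - left; apply incl_antisym; auto.
  - destruct e; simpl; [right; left|right; right]; split; auto.
  - destruct e; simpl; [right; right|right; left]; split; auto.
  - exfalso; tauto.
Qed.

(* An annotation assigns to each progressive variable a persistent stage of its operator,
   where the operator is evaluated under the annotation itself (this is not circular: the
   operator of [Y] only reads the variables bound above [Y]). *)
Definition coherent (tau : env M) : Prop :=
  forall e Y a, binds phi0 Y e a -> progressive e Y = true ->
    stage e (fix_op M Y a (annot_env tau)) (tau Y) /\ persistent M (tau Y).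

Fixpoint annot_lt (l : list binder) (t1 t2 : env M) : Prop :=
  match l with
  | [] => False
  | (e, Y, a) :: l' => (progressive e Y = true /\ stage_lt e (t1 Y) (t2 Y)) \/
                       ((progressive e Y = true -> t1 Y = t2 Y) /\ annot_lt l' t1 t2)
  end.

Fixpoint annot_eq (l : list binder) (t1 t2 : env M) : Prop :=
  match l with
  | [] => True
  | (e, Y, a) :: l' => (progressive e Y = true -> t1 Y = t2 Y) /\ annot_eq l' t1 t2
  end.

Definition annot_le (l : list binder) (t1 t2 : env M) : Prop := annot_lt l t1 t2 \/ annot_eq l t1 t2.

Lemma annot_eq_refl l t : annot_eq l t t.
Proof. induction l as [|[[e Y] a] l IH]; simpl; auto. Qed.

Lemma annot_eq_sym l t1 t2 : annot_eq l t1 t2 -> annot_eq l t2 t1.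
Proof.
  induction l as [|[[e Y] a] l IH]; simpl; auto. intros [H1 H2]; split; auto.
  intro; symmetry; auto.
Qed.

Lemma annot_eq_trans l t1 t2 t3 : annot_eq l t1 t2 -> annot_eq l t2 t3 -> annot_eq l t1 t3.
Proof.
  induction l as [|[[e Y] a] l IH]; simpl; auto. intros [H1 H2] [H3 H4]; split; eauto.
  intro Hp; rewrite H1, H3; auto.
Qed.

Lemma annot_lt_trans l a b c : annot_lt l a b -> annot_lt l b c -> annot_lt l a c.
Proof.
  induction l as [|[[e Y] x] l IH]; simpl; auto.
  intros [[Hp1 Hs1]|[He1 Hl1]] [[Hp2 Hs2]|[He2 Hl2]].
  - left; split; auto; eapply stage_lt_trans; eauto.
  - left; split; auto. rewrite <- (He2 Hp1); auto.
  - left; split; auto. rewrite (He1 Hp2); auto.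
  - right; split; eauto. intro Hp; rewrite He1, He2; auto.
Qed.

Lemma annot_eq_lt_trans l a b c : annot_eq l a b -> annot_lt l b c -> annot_lt l a c.
Proof.
  induction l as [|[[e Y] x] l IH]; simpl; auto.
  intros [He Hl] [[Hp Hs]|[He2 Hl2]].
  - left; split; auto; rewrite He; auto.
  - right; split; eauto. intro Hp; rewrite He, He2; auto.
Qed.

Lemma annot_lt_eq_trans l a b c : annot_lt l a b -> annot_eq l b c -> annot_lt l a c.
Proof.
  induction l as [|[[e Y] x] l IH]; simpl; auto.
  intros [[Hp Hs]|[He2 Hl2]] [He Hl].
  - left; split; auto; rewrite <- He; auto.
  - right; split; eauto. intro Hp; rewrite He2, He; auto.
Qed.

Lemma annot_lt_irrefl l a : ~ annot_lt l a a.
Proof.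
  induction l as [|[[e Y] x] l IH]; simpl; auto.
  intros [[Hp Hs]|[_ H]]; [eapply stage_lt_irrefl; eauto|eapply IH; eauto].
Qed.

Lemma annot_le_trans l a b c : annot_le l a b -> annot_le l b c -> annot_le l a c.
Proof.
  intros [H1|H1] [H2|H2].
  - left; eapply annot_lt_trans; eauto.
  - left; eapply annot_lt_eq_trans; eauto.
  - left; eapply annot_eq_lt_trans; eauto.
  - right; eapply annot_eq_trans; eauto.
Qed.

Lemma annot_le_lt_trans l a b c : annot_le l a b -> annot_lt l b c -> annot_lt l a c.
Proof. intros [H1|H1] H2; [eapply annot_lt_trans|eapply annot_eq_lt_trans]; eauto. Qed.

Lemma annot_lt_le_trans l a b c : annot_lt l a b -> annot_le l b c -> annot_lt l a c.
Proof. intros H1 [H2|H2]; [eapply annot_lt_trans|eapply annot_lt_eq_trans]; eauto. Qed.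

Lemma annot_lt_app l1 l2 a b :
  annot_lt (l1 ++ l2) a b <-> annot_lt l1 a b \/ (annot_eq l1 a b /\ annot_lt l2 a b).
Proof. induction l1 as [|[[e Y] x] l IH]; simpl; [tauto|]. rewrite IH. tauto. Qed.

Lemma annot_eq_app l1 l2 a b : annot_eq (l1 ++ l2) a b <-> annot_eq l1 a b /\ annot_eq l2 a b.
Proof. induction l1 as [|[[e Y] x] l IH]; simpl; [tauto|]. rewrite IH. tauto. Qed.

Lemma annot_le_app_l l1 l2 a b : annot_le (l1 ++ l2) a b -> annot_le l1 a b.
Proof. unfold annot_le. rewrite annot_lt_app, annot_eq_app. tauto. Qed.

Lemma annot_eq_In l a b e Y x :
  annot_eq l a b -> In (e, Y, x) l -> progressive e Y = true -> a Y = b Y.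
Proof.
  induction l as [|[[e0 Y0] x0] l IH]; simpl; intros HH Hin Hp; [contradiction|].
  destruct HH as [H1 H2].
  destruct Hin as [Heq|Hin]; [inversion Heq; subst; auto|eauto].
Qed.

Lemma annot_eq_of_names l (t1 t2 : env M) :
  (forall Y, In Y (binder_names l) -> t1 Y = t2 Y) -> annot_eq l t1 t2.
Proof.
  induction l as [|[[e Y] a] l IH]; intros H; [exact I|]. split.
  - intros _. apply H; simpl; auto.
  - apply IH. intros Y0 HY0. apply H; simpl; auto.
Qed.

Lemma binder_of_name l1 l2 Y e a : binders phi0 = l1 ++ l2 ->
  In Y (binder_names l1) -> binds phi0 Y e a -> In (e, Y, a) l1.
Proof.
  intros HL HY Hb. unfold binder_names in HY. apply in_map_iff in HY.
  destruct HY as [en [Hen Hin]].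
  assert (Hin2 : In en (binders phi0)) by (rewrite HL; apply in_or_app; auto).
  assert (HbL : In (e, Y, a) (binders phi0)) by (apply In_binders; auto).
  assert (Heq : en = (e, Y, a)).
  { apply (NoDup_map_inj binder_name (binders phi0) en (e, Y, a) (well_bounded_NoDup _ Hwb));
    auto. }
  subst en; auto.
Qed.

Lemma binds_of_binders e Y a l1 l2 : binders phi0 = l1 ++ (e, Y, a) :: l2 -> binds phi0 Y e a.
Proof. intros H. apply In_binders. rewrite H. apply in_or_app; right; simpl; auto. Qed.

Lemma annot_env_eq_prefix l1 l2 t1 t2 : binders phi0 = l1 ++ l2 -> annot_eq l1 t1 t2 ->
  forall X, In X (binder_names l1) -> annot_env t1 X = annot_env t2 X.
Proof.
  intros HL He X HX.
  apply (annot_env_agree (fun X => ~ In X (binder_names l1))).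
  - intros e Y a Hb HY X0 Hf Hn. apply Hn. apply NNPP in HY.
    eapply free_var_precedes; eauto. eapply binder_of_name; eauto.
  - intros e Y a Hb HY Hp. apply NNPP in HY. eapply annot_eq_In; eauto.
    eapply binder_of_name; eauto.
  - tauto.
Qed.

Lemma fix_op_eq_prefix l1 l2 e Y a t1 t2 :
  binders phi0 = l1 ++ (e, Y, a) :: l2 -> annot_eq l1 t1 t2 ->
  fix_op M Y a (annot_env t1) = fix_op M Y a (annot_env t2).
Proof.
  intros HL He. apply functional_extensionality; intro A. unfold fix_op.
  apply sem_ext. intros X HX. unfold upd. destruct (Nat.eqb_spec X Y) as [->|Hn]; auto.
  eapply annot_env_eq_prefix; eauto.
  assert (HX2 : In X (binder_names (l1 ++ [(e, Y, a)]))).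
  { eapply free_var_precedes with (l2 := l2); eauto.
    - rewrite HL, <- app_assoc; auto.
    - apply in_or_app; right; simpl; auto.
    - simpl; auto. }
  unfold binder_names in HX2. rewrite map_app in HX2. apply in_app_or in HX2.
  destruct HX2 as [H|[H|[]]]; auto. simpl in H; congruence.
Qed.

Lemma binder_op_mono e Y a rho : binds phi0 Y e a ->
  forall A B, incl A B -> incl (fix_op M Y a rho A) (fix_op M Y a rho B).
Proof. intros Hb. apply fix_op_mono. apply (binds_mu_pos Y e a); auto. Qed.

Lemma annot_lt_wf l1 l2 : binders phi0 = l1 ++ l2 ->
  forall tau, coherent tau -> Acc (fun t1 t2 => coherent t1 /\ coherent t2 /\ annot_lt l1 t1 t2) tau.
Proof.
  revert l2; induction l1 as [|h l IH] using rev_ind; intros l2 HL tau Htau.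
  - constructor. intros y [_ [_ []]].
  - destruct h as [[e Y] a].
    assert (HL' : binders phi0 = l ++ (e, Y, a) :: l2) by (rewrite HL, <- app_assoc; auto).
    assert (Hb : binds phi0 Y e a) by (eapply binds_of_binders; eauto).
    assert (Hsplit : forall t1 t2, annot_lt (l ++ [(e, Y, a)]) t1 t2 -> annot_lt l t1 t2 \/
              (annot_eq l t1 t2 /\ progressive e Y = true /\ stage_lt e (t1 Y) (t2 Y))).
    { intros t1 t2 H. apply annot_lt_app in H. simpl in H. tauto. }
    pose proof (IH ((e, Y, a) :: l2) HL' tau Htau) as Hacc. clear IH.
    revert Htau. induction Hacc as [tau _ IHout]. intro Htau.
    destruct (progressive e Y) eqn:Ep.
    + (* inner induction on the stage of [Y], with the prefix [l] frozen *)
      destruct (Htau e Y a Hb Ep) as [HTW _].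
      assert (Hin : forall D, Acc (stage_below e (fix_op M Y a (annot_env tau))) D ->
                 forall t1, coherent t1 -> annot_eq l t1 tau -> t1 Y = D ->
                 Acc (fun t1 t2 => coherent t1 /\ coherent t2 /\
                                   annot_lt (l ++ [(e, Y, a)]) t1 t2) t1).
      { intros D HD. induction HD as [D _ IHin]. intros t1 Hc1 He1 HD1. constructor.
        intros t2 [Hc2 [_ Hlt]]. destruct (Hsplit _ _ Hlt) as [Hl|[He2 [_ Hs]]].
        - apply IHout; auto. split; [|split]; auto. eapply annot_lt_eq_trans; eauto.
        - apply (IHin (t2 Y)); auto; [|eapply annot_eq_trans; eauto].
          destruct (Hc2 e Y a Hb Ep) as [HT2 _].
          rewrite (fix_op_eq_prefix l l2 e Y a t2 tau HL' (annot_eq_trans _ _ _ _ He2 He1)) in HT2.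
          destruct e; simpl in *; split; auto; rewrite <- HD1; auto. }
      apply (Hin (tau Y)); auto; [|apply annot_eq_refl].
      apply stage_wf; auto. apply (binder_op_mono e); auto.
    + constructor. intros t2 [Hc2 [_ Hlt]]. destruct (Hsplit _ _ Hlt) as [Hl|[_ [Hp _]]].
      * apply IHout; auto.
      * discriminate.
Qed.

Lemma annot_lt_total l1 l2 : binders phi0 = l1 ++ l2 -> forall t1 t2, coherent t1 -> coherent t2 ->
  annot_lt l1 t1 t2 \/ annot_eq l1 t1 t2 \/ annot_lt l1 t2 t1.
Proof.
  revert l2; induction l1 as [|h l IH] using rev_ind; intros l2 HL t1 t2 H1 H2.
  - simpl; auto.
  - destruct h as [[e Y] a].
    assert (HL' : binders phi0 = l ++ (e, Y, a) :: l2) by (rewrite HL, <- app_assoc; auto).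
    assert (Hb : binds phi0 Y e a) by (eapply binds_of_binders; eauto).
    rewrite !annot_lt_app, annot_eq_app. simpl.
    destruct (IH _ HL' t1 t2 H1 H2) as [H|[H|H]]; [tauto| |tauto].
    destruct (progressive e Y) eqn:Ep.
    + destruct (H1 e Y a Hb Ep) as [T1 _]. destruct (H2 e Y a Hb Ep) as [T2 _].
      rewrite (fix_op_eq_prefix l l2 e Y a t2 t1 HL' (annot_eq_sym _ _ _ H)) in T2.
      destruct (stage_trichotomy e _ (binder_op_mono e Y a _ Hb) _ _ T1 T2) as [He|[Hs|Hs]].
      * right; left; split; auto.
      * left; right; split; auto.
      * right; right; right; split; auto. apply annot_eq_sym; auto.
    + right; left; split; auto. split; auto. intro; discriminate.
Qed.

Definition least_annot (Q : env M -> Prop) (tau : env M) : Prop :=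
  coherent tau /\ Q tau /\ forall t, coherent t -> Q t -> annot_le (binders phi0) tau t.

Lemma least_annot_exists (Q : env M -> Prop) tau : coherent tau -> Q tau ->
  exists t0, least_annot Q t0.
Proof.
  intros Hc HQ.
  assert (HL : binders phi0 = binders phi0 ++ []) by (rewrite app_nil_r; auto).
  pose proof (annot_lt_wf _ [] HL tau Hc) as Hacc.
  revert Hc HQ. induction Hacc as [tau _ IH]. intros Hc HQ.
  destruct (classic (exists t, coherent t /\ Q t /\ annot_lt (binders phi0) t tau))
    as [[t [Ht1 [Ht2 Ht3]]]|Hn].
  - apply (IH t); auto.
  - exists tau; split; [auto|split; [auto|]]. intros t Ht HQt.
    destruct (annot_lt_total _ [] HL tau t Hc Ht) as [H|[H|H]]; [left|right|]; auto.
    exfalso; apply Hn; exists t; auto.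
Qed.

Lemma least_annot_unique Q t1 t2 :
  least_annot Q t1 -> least_annot Q t2 -> annot_eq (binders phi0) t1 t2.
Proof.
  intros [H1 [H2 H3]] [H4 [H5 H6]].
  destruct (H3 t2 H4 H5) as [A|A]; destruct (H6 t1 H1 H2) as [B|B]; auto.
  - exfalso. apply (annot_lt_irrefl (binders phi0) t1). eapply annot_lt_trans; eauto.
  - exfalso. apply (annot_lt_irrefl (binders phi0) t1). eapply annot_lt_eq_trans; eauto.
Qed.

(** * Resetting an annotation *)

Definition bound_below (Z Y : nat) : Prop :=
  exists eZ aZ e b, binds phi0 Z eZ aZ /\ subform (FFix e Y b) aZ.

(* Changing [Z] changes the operators of the variables bound inside it, so these are reset
   to the bottom stage, which is a stage of every operator. *)
Definition reset_annot (tau : env M) (Z : nat) (D : W M -> Prop) : env M :=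
  fun Y => if Nat.eqb Y Z then D
           else if excluded_middle_informative (bound_below Z Y) then stage_bot (binder_eta Y)
           else tau Y.

Definition at_or_below (Z X : nat) : Prop := X = Z \/ bound_below Z X.

Lemma at_or_below_free Z e Y a : binds phi0 Y e a -> ~ at_or_below Z Y ->
  forall X, occurs_free X (FFix e Y a) -> ~ at_or_below Z X.
Proof.
  intros Hb HnY X Hf HX. apply HnY.
  destruct (free_var_bound _ _ Hb Hf) as [eX [bX [HbX Hsub]]].
  destruct HX as [->|[eZ [aZ [e' [b' [HbZ Hs]]]]]].
  - right. exists eX, bX, e, a. auto.
  - right. exists eZ, aZ, e, a. split; auto.
    pose proof (binds_subform _ _ _ _ _ _ HbZ Hs) as HbX'.
    destruct (binds_unique X e' b' eX bX HbX' HbX) as [-> ->].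
    eapply subform_trans; [exact Hs|]. eapply subform_trans; [apply subform_fix_body|exact Hsub].
Qed.

Lemma free_not_below Z eZ aZ X : binds phi0 Z eZ aZ -> occurs_free X (FFix eZ Z aZ) ->
  ~ at_or_below Z X.
Proof.
  intros Hb Hf [HX|[eZ' [aZ' [e [b [HbZ Hs]]]]]].
  - subst. destruct Hf; auto.
  - destruct (binds_unique Z eZ' aZ' eZ aZ HbZ Hb) as [-> ->].
    destruct (free_var_bound _ _ Hb Hf) as [eX [bX [HbX Hsub]]].
    pose proof (binds_subform _ _ _ _ _ _ Hb Hs) as HbX'.
    destruct (binds_unique X e b eX bX HbX' HbX) as [-> ->].
    apply subform_size in Hsub. apply subform_size in Hs. simpl in *. lia.
Qed.

Lemma reset_annot_out tau Z D Y : ~ at_or_below Z Y -> reset_annot tau Z D Y = tau Y.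
Proof.
  intros H. unfold reset_annot. destruct (Nat.eqb_spec Y Z); [exfalso; apply H; left; auto|].
  destruct (excluded_middle_informative (bound_below Z Y)); auto. exfalso; apply H; right; auto.
Qed.

Lemma annot_env_reset_out tau Z D X : ~ at_or_below Z X ->
  annot_env (reset_annot tau Z D) X = annot_env tau X.
Proof.
  intros HX. apply (annot_env_agree (at_or_below Z)); auto.
  - intros e Y a Hb HY X0 Hf. eapply at_or_below_free; eauto.
  - intros e Y a Hb HY _. apply reset_annot_out; auto.
Qed.

Lemma fix_op_reset tau Z eZ aZ D : binds phi0 Z eZ aZ ->
  fix_op M Z aZ (annot_env (reset_annot tau Z D)) = fix_op M Z aZ (annot_env tau).
Proof.
  intros Hb. apply functional_extensionality; intro A. unfold fix_op. apply sem_ext.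
  intros X HX. unfold upd. destruct (Nat.eqb_spec X Z) as [->|Hn]; auto.
  apply annot_env_reset_out. eapply free_not_below; eauto. simpl; auto.
Qed.

Lemma sem_body_reset tau Z eZ aZ D : binds phi0 Z eZ aZ -> progressive eZ Z = true ->
  sem M (annot_env (reset_annot tau Z D)) aZ = fix_op M Z aZ (annot_env tau) D.
Proof.
  intros Hb Hp. unfold fix_op. apply sem_ext. intros X HX.
  destruct (Nat.eq_dec X Z) as [->|Hn].
  - rewrite upd_eq, (annot_env_binder _ eZ Z aZ Hb), Hp.
    unfold reset_annot. rewrite Nat.eqb_refl; auto.
  - rewrite upd_neq by auto. apply annot_env_reset_out. eapply free_not_below; eauto.
    simpl; auto.
Qed.

Lemma reset_annot_coherent tau Z eZ aZ D : coherent tau -> binds phi0 Z eZ aZ ->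
  progressive eZ Z = true -> stage eZ (fix_op M Z aZ (annot_env tau)) D -> persistent M D ->
  coherent (reset_annot tau Z D).
Proof.
  intros Hc Hb Hp HT Hu e Y a HbY HpY.
  destruct (classic (at_or_below Z Y)) as [HB|HB].
  - destruct (Nat.eq_dec Y Z) as [->|Hn].
    + destruct (binds_unique Z e a eZ aZ HbY Hb) as [-> ->].
      unfold reset_annot at 2 3. rewrite Nat.eqb_refl. rewrite (fix_op_reset tau Z eZ aZ D Hb).
      auto.
    + destruct HB as [HB|HB]; [contradiction|].
      unfold reset_annot at 2 3. apply Nat.eqb_neq in Hn. rewrite Hn.
      destruct (excluded_middle_informative (bound_below Z Y)); [|contradiction].
      rewrite (binder_eta_binds Y e a HbY).
      split; [apply stage_bot_stage|apply stage_bot_persistent].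
  - rewrite !reset_annot_out by auto.
    replace (fix_op M Y a (annot_env (reset_annot tau Z D))) with (fix_op M Y a (annot_env tau));
      [apply Hc; auto|].
    apply functional_extensionality; intro A. unfold fix_op. apply sem_ext.
    intros X HX. unfold upd. destruct (Nat.eqb_spec X Y) as [->|Hn]; auto.
    symmetry. apply annot_env_reset_out. eapply at_or_below_free; eauto. simpl; auto.
Qed.

Definition bot_annot : env M := fun Y => stage_bot (binder_eta Y).

Lemma bot_annot_coherent : coherent bot_annot.
Proof.
  intros e Y a Hb Hp. unfold bot_annot. rewrite (binder_eta_binds Y e a Hb).
  split; [apply stage_bot_stage|apply stage_bot_persistent].
Qed.

Section ResetOrder.
Variables (X : nat) (eX : eta) (aX : form) (l1 l2 : list binder).
Hypothesis HLs : binders phi0 = l1 ++ (eX, X, aX) :: binders aX ++ l2.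

Definition upto_X : list binder := l1 ++ [(eX, X, aX)].

Lemma binders_upto_X : binders phi0 = upto_X ++ binders aX ++ l2.
Proof. unfold upto_X; rewrite HLs, <- app_assoc; auto. Qed.

Lemma upto_X_disjoint Y :
  In Y (binder_names upto_X) -> In Y (binder_names (binders aX)) -> False.
Proof.
  intros H1 H2. pose proof (well_bounded_NoDup _ Hwb) as ND. rewrite binders_upto_X in ND.
  unfold binder_names in ND. rewrite map_app in ND.
  apply (NoDup_app_disjoint _ _ Y ND H1). rewrite map_app. apply in_or_app; auto.
Qed.

Lemma bound_below_X_in Z : bound_below X Z -> In Z (binder_names (binders aX)).
Proof.
  intros [eZ [aZ [e [b [Hb Hs]]]]].
  destruct (binds_unique X eZ aZ eX aX Hb (binds_of_binders _ _ _ _ _ HLs)) as [-> ->].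
  apply in_map_iff. exists (e, Z, b). split; auto. apply In_binders; auto.
Qed.

Lemma bound_below_X_trans Z Y : bound_below X Z -> bound_below Z Y -> bound_below X Y.
Proof.
  intros [e1 [a1 [e2 [b2 [H1 H2]]]]] [e3 [a3 [e4 [b4 [H3 H4]]]]].
  pose proof (binds_subform _ _ _ _ _ _ H1 H2) as HZ.
  destruct (binds_unique Z e3 a3 e2 b2 H3 HZ) as [-> ->].
  exists e1, a1, e4, b4. split; auto. eapply subform_trans; [exact H2|].
  eapply subform_trans; [apply subform_fix_body|exact H4].
Qed.

Lemma reset_below_X_eq tau Z D : bound_below X Z -> annot_eq upto_X (reset_annot tau Z D) tau.
Proof.
  intros HZ. apply annot_eq_of_names. intros Y HY. apply reset_annot_out. intros [->|HD].
  - apply (upto_X_disjoint Z HY). apply bound_below_X_in; auto.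
  - apply (upto_X_disjoint Y HY). apply bound_below_X_in. eapply bound_below_X_trans; eauto.
Qed.

Lemma reset_X_lt tau D : progressive eX X = true -> stage_lt eX D (tau X) ->
  annot_lt upto_X (reset_annot tau X D) tau.
Proof.
  intros Hp Hs. unfold upto_X. apply annot_lt_app. right. split.
  - apply annot_eq_of_names. intros Y HY. apply reset_annot_out. intros [->|HD].
    + pose proof (well_bounded_NoDup _ Hwb) as ND. rewrite HLs in ND. unfold binder_names in ND.
      rewrite map_app in ND. apply (NoDup_app_disjoint _ _ X ND HY). simpl; auto.
    + apply (upto_X_disjoint Y).
      * unfold upto_X, binder_names; rewrite map_app; apply in_or_app; auto.
      * apply bound_below_X_in; auto.
  - simpl. left. split; auto. unfold reset_annot. rewrite Nat.eqb_refl. auto.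
Qed.

End ResetOrder.

(** * Refuted sequents *)

Definition signed_holds (rho : nat -> W M) (tau : env M) (sf : sform) : Prop :=
  match sf with
  | (SL, x, g) => sem M (annot_env tau) g (rho x)
  | (SR, x, g) => ~ sem M (annot_env tau) g (rho x)
  end.

Definition atom_holds (rho : nat -> W M) (t : atom) : Prop :=
  match t with ALe x y => wle M (rho x) (rho y) | ARel x y => wR M (rho x) (rho y) end.

(* each formula is refuted under its own annotation *)
Definition refutes (rho : nat -> W M) (c : sequent) : Prop :=
  (forall t, In t (atoms c) -> atom_holds rho t) /\
  (forall sf, in_sequent c sf -> exists tau, coherent tau /\ signed_holds rho tau sf).

Definition well_signed (sf : sform) : Prop :=
  let '(s, x, g) := sf in
  sided side_of s g /\
  (subform g phi0 \/ (s = SR /\ exists a, g = FLDia a /\ subform a phi0)).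

Definition well_signed_seq (c : sequent) : Prop := forall sf, in_sequent c sf -> well_signed sf.

Definition least_refuting (rho : nat -> W M) (sf : sform) : env M -> Prop :=
  least_annot (fun t => signed_holds rho t sf).

Definition annot_step (g : form) (tp t' : env M) : Prop :=
  (forall Z, g = FVar Z -> progressive (binder_eta Z) Z = true ->
     exists D, t' = reset_annot tp Z D /\ stage_lt (binder_eta Z) D (tp Z)) /\
  (t' = tp \/ exists Z D, t' = reset_annot tp Z D /\
                          ((exists e b, g = FFix e Z b) \/ g = FVar Z)).

Definition minors_refuted (pr : option sform) (m : sform -> Prop) (p : sequent)
  (rho rho' : nat -> W M) : Prop :=
  forall s x g, pr = Some (s, x, g) -> exists tp, least_refuting rho (s, x, g) tp /\
    forall sf, m sf -> in_sequent p sf ->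
      exists t', coherent t' /\ signed_holds rho' t' sf /\ annot_step g tp t'.

Definition agree_on (c : sequent) (rho rho' : nat -> W M) : Prop :=
  forall l, occurs_label l c -> rho' l = rho l.

Definition refuted_premise (c : sequent) (ps : list sequent) (pr : option sform)
  (ms : list (sform -> Prop)) (rho : nat -> W M) : Prop :=
  exists i p rho', nth_error ps i = Some p /\ well_signed_seq p /\ refutes rho' p /\
    agree_on c rho rho' /\ minors_refuted pr (nth i ms (fun _ => False)) p rho rho'.

Lemma signed_holds_agree rho rho' tau c sf : in_sequent c sf -> agree_on c rho rho' ->
  signed_holds rho tau sf -> signed_holds rho' tau sf.
Proof.
  destruct sf as [[s x] g]. intros Hin Hl H.
  assert (Hx : occurs_label x c) by (right; exists g; destruct s; auto).
  destruct s; simpl in *; rewrite (Hl x Hx); auto.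
Qed.

Lemma atom_holds_agree rho rho' c t : In t (atoms c) -> agree_on c rho rho' ->
  atom_holds rho t -> atom_holds rho' t.
Proof.
  destruct t as [x y|x y]; intros Hin Hl H; simpl in *;
  rewrite !Hl; auto; left; eauto 10.
Qed.

Lemma least_refuting_exists c rho sf : refutes rho c -> in_sequent c sf ->
  exists tp, least_refuting rho sf tp.
Proof.
  intros [_ H] Hin. destruct (H sf Hin) as [tau [Hc Hh]].
  eapply least_annot_exists; eauto.
Qed.

Lemma annot_env_persistent tau : coherent tau -> forall Y, persistent M (annot_env tau Y).
Proof.
  intros Hc Y. apply annot_env_from_persistent; auto.
  - intros e Y0 a Hs Hp. apply (Hc e Y0 a Hs Hp).
  - intros Y0 u v _ [].
Qed.

Lemma binder_op_persistent tau X b e : coherent tau -> binds phi0 X e b ->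
  forall A, persistent M A -> persistent M (fix_op M X b (annot_env tau) A).
Proof.
  intros Hc Hb A HA. apply fix_op_persistent; auto.
  - apply (binds_mu_pos X e b Hb).
  - apply annot_env_persistent; auto.
Qed.

(** * Unfolding fixed points *)

Lemma progressive_side e X : progressive e X = true <->
  (e = Mu /\ side_of X = SL) \/ (e = Nu /\ side_of X = SR).
Proof. unfold progressive; destruct e, (side_of X); intuition congruence. Qed.

Lemma annot_env_nonprogressive tp e X b : binds phi0 X e b -> progressive e X = false ->
  annot_env tp X = sem M (annot_env tp) (FFix e X b).
Proof. intros Hb Hp. rewrite (annot_env_binder tp e X b Hb), Hp; auto. Qed.

Lemma unfold_nonprogressive tp e X b w : binds phi0 X e b -> progressive e X = false ->
  (side_of X = SL -> sem M (annot_env tp) (FFix e X b) w -> sem M (annot_env tp) b w) /\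
  (side_of X = SR -> ~ sem M (annot_env tp) (FFix e X b) w -> ~ sem M (annot_env tp) b w).
Proof.
  intros Hb Hp. destruct (binds_mu_pos X e b Hb) as [_ Hpos].
  pose proof (annot_env_nonprogressive tp e X b Hb Hp) as HX.
  split; intros Hsd Hw; unfold progressive in Hp; rewrite Hsd in Hp; destruct e; try discriminate.
  - pose proof (nu_unfold M X b _ w Hpos Hw) as H. unfold fix_op in H.
    rewrite <- HX, upd_same in H. exact H.
  - intro H. apply Hw. apply mu_fold; auto. unfold fix_op. rewrite <- HX, upd_same. auto.
Qed.

Lemma reset_stage_coherent tp e X b D : binds phi0 X e b -> progressive e X = true ->
  coherent tp -> stage e (fix_op M X b (annot_env tp)) D -> coherent (reset_annot tp X D).
Proof.
  intros Hb Hp Hc HD. eapply reset_annot_coherent; eauto.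
  assert (Hop : forall A, persistent M A -> persistent M (fix_op M X b (annot_env tp) A))
    by (intros A HA; eapply binder_op_persistent; eauto).
  destruct e; [apply (approx_upclosed _ (fix_op M X b (annot_env tp)) (wle M))
              |apply (coapprox_upclosed _ (fix_op M X b (annot_env tp)) (wle M))]; auto.
Qed.

Lemma annot_step_reset_var tp X e b D : binds phi0 X e b ->
  stage_lt e D (tp X) -> annot_step (FVar X) tp (reset_annot tp X D).
Proof.
  intros Hb Hs. split.
  - intros Z HZ _. inversion HZ; subst. exists D. rewrite (binder_eta_binds _ _ _ Hb). auto.
  - right. exists X, D. auto.
Qed.

Lemma annot_step_reset_fix tp X e b D : annot_step (FFix e X b) tp (reset_annot tp X D).
Proof. split; [intros Z HZ; discriminate|right; exists X, D; eauto]. Qed.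

Lemma annot_step_same g tp : (forall Z, g <> FVar Z) -> annot_step g tp tp.
Proof. intros H. split; [intros Z HZ; exfalso; apply (H Z HZ)|left; auto]. Qed.

Lemma annot_step_nonprogressive_var tp X e b : binds phi0 X e b -> progressive e X = false ->
  annot_step (FVar X) tp tp.
Proof.
  intros Hb Hp. split; auto. intros Z HZ HpZ. inversion HZ; subst.
  rewrite (binder_eta_binds _ _ _ Hb), Hp in HpZ. discriminate.
Qed.

Lemma regen_left_refuted tp e X b w : binds phi0 X e b -> side_of X = SL -> coherent tp ->
  annot_env tp X w ->
  exists t', coherent t' /\ sem M (annot_env t') b w /\ annot_step (FVar X) tp t'.
Proof.
  intros Hb Hsd Hc Hw. destruct (binds_mu_pos X e b Hb) as [_ Hpos].
  destruct (progressive e X) eqn:Hp.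
  - destruct (proj1 (progressive_side e X) Hp) as [[-> _]|[_ Hs]]; [|congruence].
    rewrite (annot_env_binder tp Mu X b Hb), Hp in Hw.
    destruct (Hc Mu X b Hb Hp) as [HT _].
    destruct (approx_below _ _ (fix_op_mono M X b _ Hpos) _ HT w Hw) as [B [HB [Hs Hop]]].
    exists (reset_annot tp X B). split; [|split].
    + eapply reset_stage_coherent; eauto.
    + rewrite (sem_body_reset tp X Mu b B Hb Hp). auto.
    + eapply annot_step_reset_var; eauto.
  - exists tp. split; [auto|split; [|eapply annot_step_nonprogressive_var; eauto]].
    rewrite (annot_env_nonprogressive tp e X b Hb Hp) in Hw.
    apply (proj1 (unfold_nonprogressive tp e X b w Hb Hp)); auto.
Qed.

Lemma fix_left_refuted tp e X b w : binds phi0 X e b -> side_of X = SL -> coherent tp ->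
  sem M (annot_env tp) (FFix e X b) w ->
  exists t', coherent t' /\ sem M (annot_env t') b w /\ annot_step (FFix e X b) tp t'.
Proof.
  intros Hb Hsd Hc Hw.
  destruct (progressive e X) eqn:Hp.
  - destruct (proj1 (progressive_side e X) Hp) as [[-> _]|[_ Hs]]; [|congruence].
    destruct (lfp_approx _ (fix_op M X b (annot_env tp)) w Hw) as [D [HD Hop]].
    exists (reset_annot tp X D). split; [|split].
    + eapply reset_stage_coherent; eauto.
    + rewrite (sem_body_reset tp X Mu b D Hb Hp). auto.
    + apply annot_step_reset_fix.
  - exists tp. split; [auto|split; [|apply annot_step_same; congruence]].
    apply (proj1 (unfold_nonprogressive tp e X b w Hb Hp)); auto.
Qed.

Lemma regen_right_refuted tp e X b w : binds phi0 X e b -> side_of X = SR -> coherent tp ->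
  ~ annot_env tp X w ->
  exists t', coherent t' /\ ~ sem M (annot_env t') b w /\ annot_step (FVar X) tp t'.
Proof.
  intros Hb Hsd Hc Hw. destruct (binds_mu_pos X e b Hb) as [_ Hpos].
  destruct (progressive e X) eqn:Hp.
  - destruct (proj1 (progressive_side e X) Hp) as [[_ Hs]|[-> _]]; [congruence|].
    rewrite (annot_env_binder tp Nu X b Hb), Hp in Hw.
    destruct (Hc Nu X b Hb Hp) as [HT _].
    destruct (coapprox_above _ _ (fix_op_mono M X b _ Hpos) _ HT w Hw) as [U [HU [Hs Hop]]].
    exists (reset_annot tp X U). split; [|split].
    + eapply reset_stage_coherent; eauto.
    + rewrite (sem_body_reset tp X Nu b U Hb Hp). auto.
    + eapply annot_step_reset_var; eauto.
  - exists tp. split; [auto|split; [|eapply annot_step_nonprogressive_var; eauto]].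
    rewrite (annot_env_nonprogressive tp e X b Hb Hp) in Hw.
    apply (proj2 (unfold_nonprogressive tp e X b w Hb Hp)); auto.
Qed.

Lemma fix_right_refuted tp e X b w : binds phi0 X e b -> side_of X = SR -> coherent tp ->
  ~ sem M (annot_env tp) (FFix e X b) w ->
  exists t', coherent t' /\ ~ sem M (annot_env t') b w /\ annot_step (FFix e X b) tp t'.
Proof.
  intros Hb Hsd Hc Hw.
  destruct (progressive e X) eqn:Hp.
  - destruct (proj1 (progressive_side e X) Hp) as [[_ Hs]|[-> _]]; [congruence|].
    destruct (gfp_coapprox _ (fix_op M X b (annot_env tp)) w Hw) as [U [HU Hop]].
    exists (reset_annot tp X U). split; [|split].
    + eapply reset_stage_coherent; eauto.
    + rewrite (sem_body_reset tp X Nu b U Hb Hp). auto.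
    + apply annot_step_reset_fix.
  - exists tp. split; [auto|split; [|apply annot_step_same; congruence]].
    apply (proj2 (unfold_nonprogressive tp e X b w Hb Hp)); auto.
Qed.

(** * Local soundness of the rules *)

Lemma premise_refuted c ps pr ms rho i p rho' PA PL PR :
  nth_error ps i = Some p ->
  extends (atoms c) (atoms p) PA -> extends (lhs c) (lhs p) PL -> extends (rhs c) (rhs p) PR ->
  well_signed_seq c -> refutes rho c -> agree_on c rho rho' ->
  (forall t, PA t -> atom_holds rho' t) ->
  (forall y g, PL (y, g) -> well_signed (SL, y, g) /\
     exists tau, coherent tau /\ signed_holds rho' tau (SL, y, g)) ->
  (forall y g, PR (y, g) -> well_signed (SR, y, g) /\
     exists tau, coherent tau /\ signed_holds rho' tau (SR, y, g)) ->
  minors_refuted pr (nth i ms (fun _ => False)) p rho rho' ->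
  refuted_premise c ps pr ms rho.
Proof.
  intros Hi HA HL HR HSyn [Hat Hsf] Hag HPA HPL HPR Hmin.
  assert (Hnew : forall sf, in_sequent p sf -> in_sequent c sf \/
            (well_signed sf /\ exists tau, coherent tau /\ signed_holds rho' tau sf)).
  { intros [[[|] y] g] Hin; simpl in Hin; [apply HL in Hin|apply HR in Hin];
    destruct Hin as [H|H]; auto. }
  exists i, p, rho'. repeat split; auto.
  - intros sf Hin. destruct (Hnew sf Hin) as [H|[H _]]; auto.
  - intros t Ht. apply HA in Ht. destruct Ht as [Ht|Ht]; auto.
    eapply atom_holds_agree; eauto.
  - intros sf Hin. destruct (Hnew sf Hin) as [H|[_ H]]; auto.
    destruct (Hsf sf H) as [tau [Hc Hh]]. exists tau; split; auto.
    eapply signed_holds_agree; eauto.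
Qed.

Lemma premise_refuted_same_annot c ps ms rho i p rho' PA PL PR s x g tp :
  nth_error ps i = Some p ->
  extends (atoms c) (atoms p) PA -> extends (lhs c) (lhs p) PL -> extends (rhs c) (rhs p) PR ->
  well_signed_seq c -> refutes rho c -> agree_on c rho rho' ->
  least_refuting rho (s, x, g) tp -> (forall Z, g <> FVar Z) ->
  (forall t, PA t -> atom_holds rho' t) ->
  (forall y h, PL (y, h) -> well_signed (SL, y, h) /\ signed_holds rho' tp (SL, y, h)) ->
  (forall y h, PR (y, h) -> well_signed (SR, y, h) /\ signed_holds rho' tp (SR, y, h)) ->
  (forall sf, nth i ms (fun _ => False) sf -> signed_holds rho' tp sf) ->
  refuted_premise c ps (Some (s, x, g)) ms rho.
Proof.
  intros Hi HA HL HR HSyn HSI Hag Htp Hg HPA HPL HPR Hmin.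
  assert (Hc : coherent tp) by apply Htp.
  eapply premise_refuted; eauto.
  - intros y h H. destruct (HPL y h H); split; eauto.
  - intros y h H. destruct (HPR y h H); split; eauto.
  - intros s' x' g' Heq. inversion Heq; subst. exists tp. split; auto.
    intros sf Hm _. exists tp. split; [|split]; auto. apply annot_step_same; auto.
Qed.

Lemma agree_on_refl c rho : agree_on c rho rho.
Proof. intros l _; reflexivity. Qed.

Definition assign (rho : nat -> W M) (y : nat) (v : W M) : nat -> W M :=
  fun l => if Nat.eqb l y then v else rho l.

Lemma assign_eq rho y v : assign rho y v y = v.
Proof. unfold assign; rewrite Nat.eqb_refl; auto. Qed.

Lemma assign_fresh rho y v c : fresh y c -> agree_on c rho (assign rho y v).
Proof.
  intros Hf l Hl. unfold assign. destruct (Nat.eqb_spec l y); subst; [contradiction|auto].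
Qed.

Lemma principal_label c s x g : in_sequent c (s, x, g) -> occurs_label x c.
Proof. destruct s; intros H; right; exists g; auto. Qed.

Lemma well_signed_subform s x g s' y h : well_signed (s, x, g) -> (forall a, g <> FLDia a) ->
  subform h g -> sided side_of s' h -> well_signed (s', y, h).
Proof.
  intros [Ho [Hs|[_ [a [Ha _]]]]] Hn Hsub Hoh.
  - split; auto. left. eapply subform_trans; eauto.
  - exfalso; eapply Hn; eauto.
Qed.

Lemma well_signed_left_subform x g : well_signed (SL, x, g) -> subform g phi0.
Proof. intros [_ [H|[H _]]]; [exact H|discriminate]. Qed.

Lemma well_signed_binder_body X e b x : binds phi0 X e b -> well_signed (side_of X, x, b).
Proof.
  intros Hb. split; [apply (sided_binder X e b Hb)|].
  left. eapply subform_trans; [exact Hb|apply subform_fix_body].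
Qed.

Ltac new_subformula := eapply well_signed_subform; eauto;
  [congruence | simpl; auto using subform_refl].

Section RuleCases.
Variables (c p p1 p2 : sequent) (x y z : nat) (a b : form) (rho : nat -> W M).
Hypothesis HSyn : well_signed_seq c.
Hypothesis HSI : refutes rho c.

Lemma pres_refuted : In (ALe x y) (atoms c) -> In (x, a) (lhs c) ->
  same (atoms c) (atoms p) -> extends (lhs c) (lhs p) (fun l => l = (y, a)) ->
  same (rhs c) (rhs p) -> refuted_premise c [p] None [fun _ => False] rho.
Proof.
  intros Ha Hx H1 H2 H3. pose proof (HSyn (SL, x, a) Hx) as Hw.
  destruct (proj2 HSI (SL, x, a) Hx) as [tau [Hc Hh]].
  apply (premise_refuted c [p] None _ rho 0 p rho _ _ _ eq_refl H1 H2 H3 HSyn HSI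
           (agree_on_refl c rho)).
  - intros t [].
  - intros y' g Heq. injection Heq as -> ->. split; [exact Hw|].
    exists tau; split; auto. simpl in *.
    assert (Hm : mu_form a) by (apply (mu_form_subform phi0 a Hmu), (well_signed_left_subform x), Hw).
    apply (sem_persistent M a _ Hm (annot_env_persistent tau Hc) (rho x) (rho y)); auto.
    apply (proj1 HSI _ Ha).
  - intros y' g [].
  - intros s x' g Heq; discriminate.
Qed.

Lemma trans_refuted : In (ALe x y) (atoms c) -> In (ALe y z) (atoms c) ->
  extends (atoms c) (atoms p) (fun t => t = ALe x z) ->
  same (lhs c) (lhs p) -> same (rhs c) (rhs p) -> refuted_premise c [p] None [fun _ => False] rho.
Proof.
  intros Ha Hb H1 H2 H3.
  apply (premise_refuted c [p] None _ rho 0 p rho _ _ _ eq_refl H1 H2 H3 HSyn HSI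
           (agree_on_refl c rho)).
  - intros t ->. simpl. eapply wle_trans; [apply (proj1 HSI _ Ha)|apply (proj1 HSI _ Hb)].
  - intros y' g [].
  - intros y' g [].
  - intros s x' g Heq; discriminate.
Qed.

Lemma and_left_refuted : In (x, FAnd a b) (lhs c) -> same (atoms c) (atoms p) ->
  extends (lhs c) (lhs p) (fun l => l = (x, a) \/ l = (x, b)) -> same (rhs c) (rhs p) ->
  refuted_premise c [p] (Some (SL, x, FAnd a b)) [fun s => s = (SL, x, a) \/ s = (SL, x, b)] rho.
Proof.
  intros Hin H1 H2 H3. pose proof (HSyn (SL, x, FAnd a b) Hin) as Hw. pose proof Hw as [[Ha Hb] _].
  destruct (least_refuting_exists c rho (SL, x, FAnd a b) HSI Hin) as [tp Htp].
  pose proof (proj1 (proj2 Htp)) as [Hha Hhb].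
  apply (premise_refuted_same_annot c [p] _ rho 0 p rho _ _ _ _ _ _ tp eq_refl H1 H2 H3 HSyn HSI
           (agree_on_refl c rho) Htp); try congruence.
  - intros t [].
  - intros y' g [Heq|Heq]; injection Heq as -> ->; split; auto; new_subformula.
  - intros y' g [].
  - intros sf [-> | ->]; auto.
Qed.

Lemma and_right_refuted : In (x, FAnd a b) (rhs c) ->
  same (atoms c) (atoms p1) -> same (lhs c) (lhs p1) ->
  extends (rhs c) (rhs p1) (fun l => l = (x, a)) ->
  same (atoms c) (atoms p2) -> same (lhs c) (lhs p2) ->
  extends (rhs c) (rhs p2) (fun l => l = (x, b)) ->
  refuted_premise c [p1; p2] (Some (SR, x, FAnd a b))
    [fun s => s = (SR, x, a); fun s => s = (SR, x, b)] rho.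
Proof.
  intros Hin H1 H2 H3 H4 H5 H6. pose proof (HSyn (SR, x, FAnd a b) Hin) as Hw.
  pose proof Hw as [[Ha Hb] _].
  destruct (least_refuting_exists c rho (SR, x, FAnd a b) HSI Hin) as [tp Htp].
  pose proof (proj1 (proj2 Htp)) as Hh. simpl in Hh.
  destruct (classic (sem M (annot_env tp) a (rho x))) as [HA|HA].
  - apply (premise_refuted_same_annot c [p1; p2] _ rho 1 p2 rho _ _ _ _ _ _ tp eq_refl
             H4 H5 H6 HSyn HSI (agree_on_refl c rho) Htp); try congruence.
    + intros t [].
    + intros y' g [].
    + intros y' g Heq; injection Heq as -> ->; split; [new_subformula|simpl; tauto].
    + intros sf ->; simpl; tauto.
  - apply (premise_refuted_same_annot c [p1; p2] _ rho 0 p1 rho _ _ _ _ _ _ tp eq_refl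
             H1 H2 H3 HSyn HSI (agree_on_refl c rho) Htp); try congruence.
    + intros t [].
    + intros y' g [].
    + intros y' g Heq; injection Heq as -> ->; split; [new_subformula|auto].
    + intros sf ->; auto.
Qed.

Lemma or_left_refuted : In (x, FOr a b) (lhs c) ->
  same (atoms c) (atoms p1) -> extends (lhs c) (lhs p1) (fun l => l = (x, a)) ->
  same (rhs c) (rhs p1) ->
  same (atoms c) (atoms p2) -> extends (lhs c) (lhs p2) (fun l => l = (x, b)) ->
  same (rhs c) (rhs p2) ->
  refuted_premise c [p1; p2] (Some (SL, x, FOr a b))
    [fun s => s = (SL, x, a); fun s => s = (SL, x, b)] rho.
Proof.
  intros Hin H1 H2 H3 H4 H5 H6. pose proof (HSyn (SL, x, FOr a b) Hin) as Hw.
  pose proof Hw as [[Ha Hb] _].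
  destruct (least_refuting_exists c rho (SL, x, FOr a b) HSI Hin) as [tp Htp].
  destruct (proj1 (proj2 Htp)) as [HA|HB].
  - apply (premise_refuted_same_annot c [p1; p2] _ rho 0 p1 rho _ _ _ _ _ _ tp eq_refl
             H1 H2 H3 HSyn HSI (agree_on_refl c rho) Htp); try congruence.
    + intros t [].
    + intros y' g Heq; injection Heq as -> ->; split; [new_subformula|auto].
    + intros y' g [].
    + intros sf ->; auto.
  - apply (premise_refuted_same_annot c [p1; p2] _ rho 1 p2 rho _ _ _ _ _ _ tp eq_refl
             H4 H5 H6 HSyn HSI (agree_on_refl c rho) Htp); try congruence.
    + intros t [].
    + intros y' g Heq; injection Heq as -> ->; split; [new_subformula|auto].
    + intros y' g [].
    + intros sf ->; auto.
Qed.

Lemma or_right_refuted : In (x, FOr a b) (rhs c) ->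
  same (atoms c) (atoms p) -> same (lhs c) (lhs p) ->
  extends (rhs c) (rhs p) (fun l => l = (x, a) \/ l = (x, b)) ->
  refuted_premise c [p] (Some (SR, x, FOr a b)) [fun s => s = (SR, x, a) \/ s = (SR, x, b)] rho.
Proof.
  intros Hin H1 H2 H3. pose proof (HSyn (SR, x, FOr a b) Hin) as Hw.
  pose proof Hw as [[Ha Hb] _].
  destruct (least_refuting_exists c rho (SR, x, FOr a b) HSI Hin) as [tp Htp].
  pose proof (proj1 (proj2 Htp)) as Hh. simpl in Hh.
  apply (premise_refuted_same_annot c [p] _ rho 0 p rho _ _ _ _ _ _ tp eq_refl
           H1 H2 H3 HSyn HSI (agree_on_refl c rho) Htp); try congruence.
  - intros t [].
  - intros y' g [].
  - intros y' g [Heq|Heq]; injection Heq as -> ->; split; try new_subformula; simpl; tauto.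
  - intros sf [-> | ->]; simpl; tauto.
Qed.

Lemma imp_left_refuted : In (x, FImp a b) (lhs c) ->
  same (atoms c) (atoms p1) -> same (lhs c) (lhs p1) ->
  extends (rhs c) (rhs p1) (fun l => l = (x, a)) ->
  same (atoms c) (atoms p2) -> extends (lhs c) (lhs p2) (fun l => l = (x, b)) ->
  same (rhs c) (rhs p2) ->
  refuted_premise c [p1; p2] (Some (SL, x, FImp a b))
    [fun s => s = (SR, x, a); fun s => s = (SL, x, b)] rho.
Proof.
  intros Hin H1 H2 H3 H4 H5 H6. pose proof (HSyn (SL, x, FImp a b) Hin) as Hw.
  pose proof Hw as [[Ha Hb] _].
  destruct (least_refuting_exists c rho (SL, x, FImp a b) HSI Hin) as [tp Htp].
  pose proof (proj1 (proj2 Htp)) as Hh. simpl in Hh.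
  destruct (classic (sem M (annot_env tp) a (rho x))) as [HA|HA].
  - apply (premise_refuted_same_annot c [p1; p2] _ rho 1 p2 rho _ _ _ _ _ _ tp eq_refl
             H4 H5 H6 HSyn HSI (agree_on_refl c rho) Htp); try congruence.
    + intros t [].
    + intros y' g Heq; injection Heq as -> ->; split; [new_subformula|].
      apply Hh; auto. apply wle_refl.
    + intros y' g [].
    + intros sf ->. apply Hh; auto. apply wle_refl.
  - apply (premise_refuted_same_annot c [p1; p2] _ rho 0 p1 rho _ _ _ _ _ _ tp eq_refl
             H1 H2 H3 HSyn HSI (agree_on_refl c rho) Htp); try congruence.
    + intros t [].
    + intros y' g [].
    + intros y' g Heq; injection Heq as -> ->; split; [new_subformula|auto].
    + intros sf ->; auto.
Qed.

Lemma imp_right_refuted : In (x, FImp a b) (rhs c) -> fresh y c ->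
  extends (atoms c) (atoms p) (fun t => t = ALe x y) ->
  extends (lhs c) (lhs p) (fun l => l = (y, a)) ->
  extends (rhs c) (rhs p) (fun l => l = (y, b)) ->
  refuted_premise c [p] (Some (SR, x, FImp a b)) [fun s => s = (SL, y, a) \/ s = (SR, y, b)] rho.
Proof.
  intros Hin Hfr H1 H2 H3. pose proof (HSyn (SR, x, FImp a b) Hin) as Hw.
  pose proof Hw as [[Ha Hb] _].
  destruct (least_refuting_exists c rho (SR, x, FImp a b) HSI Hin) as [tp Htp].
  pose proof (proj1 (proj2 Htp)) as Hh. simpl in Hh.
  assert (Hex : exists v, wle M (rho x) v /\ sem M (annot_env tp) a v /\
                          ~ sem M (annot_env tp) b v).
  { apply NNPP; intro Hn; apply Hh; intros v Hv HA. apply NNPP; intro HB. apply Hn; eauto. }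
  destruct Hex as [v [Hv [HA HB]]].
  pose proof (assign_fresh rho y v c Hfr) as Hag.
  pose proof (Hag x (principal_label c SR x _ Hin)) as Hx.
  apply (premise_refuted_same_annot c [p] _ rho 0 p (assign rho y v) _ _ _ _ _ _ tp eq_refl
           H1 H2 H3 HSyn HSI Hag Htp); try congruence.
  - intros t ->. simpl. rewrite Hx, assign_eq; auto.
  - intros y' g Heq; injection Heq as -> ->; split; [new_subformula|simpl; rewrite assign_eq; auto].
  - intros y' g Heq; injection Heq as -> ->; split; [new_subformula|simpl; rewrite assign_eq; auto].
  - intros sf [-> | ->]; simpl; rewrite assign_eq; auto.
Qed.

Lemma box_left_refuted : In (x, FBox a) (lhs c) ->
  same (atoms c) (atoms p) ->
  extends (lhs c) (lhs p) (fun l => exists y, l = (y, a) /\ In (ARel x y) (atoms c)) ->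
  same (rhs c) (rhs p) ->
  refuted_premise c [p] (Some (SL, x, FBox a))
    [fun s => exists y, s = (SL, y, a) /\ In (ARel x y) (atoms c)] rho.
Proof.
  intros Hin H1 H2 H3. pose proof (HSyn (SL, x, FBox a) Hin) as Hw. pose proof Hw as [Ha _].
  destruct (least_refuting_exists c rho (SL, x, FBox a) HSI Hin) as [tp Htp].
  pose proof (proj1 (proj2 Htp)) as Hh. simpl in Hh.
  assert (Hy : forall y, In (ARel x y) (atoms c) -> sem M (annot_env tp) a (rho y))
    by (intros y' Hy; apply (Hh (rho x) (rho y')); [apply wle_refl|apply (proj1 HSI _ Hy)]).
  apply (premise_refuted_same_annot c [p] _ rho 0 p rho _ _ _ _ _ _ tp eq_refl
           H1 H2 H3 HSyn HSI (agree_on_refl c rho) Htp); try congruence.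
  - intros t [].
  - intros y' g [y'' [Heq Hat]]; injection Heq as -> ->; split; [new_subformula|simpl; auto].
  - intros y' g [].
  - intros sf [y' [-> Hat]]; simpl; auto.
Qed.

Lemma box_right_refuted : In (x, FBox a) (rhs c) -> fresh y c -> fresh z c -> y <> z ->
  extends (atoms c) (atoms p) (fun t => t = ALe x y \/ t = ARel y z) ->
  same (lhs c) (lhs p) ->
  extends (rhs c) (rhs p) (fun l => l = (z, a)) ->
  refuted_premise c [p] (Some (SR, x, FBox a)) [fun s => s = (SR, z, a)] rho.
Proof.
  intros Hin Hfy Hfz Hyz H1 H2 H3. pose proof (HSyn (SR, x, FBox a) Hin) as Hw.
  pose proof Hw as [Ha _].
  destruct (least_refuting_exists c rho (SR, x, FBox a) HSI Hin) as [tp Htp].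
  pose proof (proj1 (proj2 Htp)) as Hh. simpl in Hh.
  assert (Hex : exists v u, wle M (rho x) v /\ wR M v u /\ ~ sem M (annot_env tp) a u).
  { apply NNPP; intro Hn; apply Hh; intros v u Hv Hu. apply NNPP; intro HA. apply Hn; eauto. }
  destruct Hex as [v [u [Hv [Hu HA]]]].
  set (rho' := assign (assign rho y v) z u).
  assert (Hag : agree_on c rho rho').
  { intros l Hl. unfold rho'.
    rewrite (assign_fresh _ z u c Hfz l Hl), (assign_fresh _ y v c Hfy l Hl); auto. }
  assert (Hz : rho' z = u) by apply assign_eq.
  assert (Hy : rho' y = v).
  { unfold rho', assign. destruct (Nat.eqb_spec y z); [contradiction|]. rewrite Nat.eqb_refl; auto. }
  pose proof (Hag x (principal_label c SR x _ Hin)) as Hx.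
  clearbody rho'.
  apply (premise_refuted_same_annot c [p] _ rho 0 p rho' _ _ _ _ _ _ tp eq_refl
           H1 H2 H3 HSyn HSI Hag Htp); try congruence.
  - intros t [-> | ->]; simpl; [rewrite Hx, Hy|rewrite Hy, Hz]; auto.
  - intros y' g [].
  - intros y' g Heq; injection Heq as -> ->; split; [new_subformula|simpl; rewrite Hz; auto].
  - intros sf ->; simpl; rewrite Hz; auto.
Qed.

Lemma dia_left_refuted : In (x, FDia a) (lhs c) -> fresh y c ->
  extends (atoms c) (atoms p) (fun t => t = ARel x y) ->
  extends (lhs c) (lhs p) (fun l => l = (y, a)) ->
  same (rhs c) (rhs p) ->
  refuted_premise c [p] (Some (SL, x, FDia a)) [fun s => s = (SL, y, a)] rho.
Proof.
  intros Hin Hfr H1 H2 H3. pose proof (HSyn (SL, x, FDia a) Hin) as Hw. pose proof Hw as [Ha _].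
  destruct (least_refuting_exists c rho (SL, x, FDia a) HSI Hin) as [tp Htp].
  pose proof (proj1 (proj2 Htp)) as Hh. simpl in Hh.
  destruct (Hh (rho x) (wle_refl M _)) as [u [Hu HA]].
  pose proof (assign_fresh rho y u c Hfr) as Hag.
  pose proof (Hag x (principal_label c SL x _ Hin)) as Hx.
  apply (premise_refuted_same_annot c [p] _ rho 0 p (assign rho y u) _ _ _ _ _ _ tp eq_refl
           H1 H2 H3 HSyn HSI Hag Htp); try congruence.
  - intros t ->. simpl. rewrite Hx, assign_eq; auto.
  - intros y' g Heq; injection Heq as -> ->; split; [new_subformula|simpl; rewrite assign_eq; auto].
  - intros y' g [].
  - intros sf ->; simpl; rewrite assign_eq; auto.
Qed.

Lemma dia_right_refuted : In (x, FDia a) (rhs c) -> fresh y c ->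
  extends (atoms c) (atoms p) (fun t => t = ALe x y) ->
  same (lhs c) (lhs p) ->
  extends (rhs c) (rhs p) (fun l => l = (y, FLDia a)) ->
  refuted_premise c [p] (Some (SR, x, FDia a)) [fun s => s = (SR, y, FLDia a)] rho.
Proof.
  intros Hin Hfr H1 H2 H3. pose proof (HSyn (SR, x, FDia a) Hin) as Hw.
  destruct Hw as [Ha [Hsub|[_ [a' [Ha' _]]]]]; [|discriminate].
  destruct (least_refuting_exists c rho (SR, x, FDia a) HSI Hin) as [tp Htp].
  pose proof (proj1 (proj2 Htp)) as Hh. simpl in Hh.
  assert (Hex : exists v, wle M (rho x) v /\ ~ exists u, wR M v u /\ sem M (annot_env tp) a u).
  { apply NNPP; intro Hn; apply Hh; intros v Hv. apply NNPP; intro HA. apply Hn; eauto. }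
  destruct Hex as [v [Hv Hn]].
  pose proof (assign_fresh rho y v c Hfr) as Hag.
  pose proof (Hag x (principal_label c SR x _ Hin)) as Hx.
  apply (premise_refuted_same_annot c [p] _ rho 0 p (assign rho y v) _ _ _ _ _ _ tp eq_refl
           H1 H2 H3 HSyn HSI Hag Htp); try congruence.
  - intros t ->. simpl. rewrite Hx, assign_eq; auto.
  - intros y' g [].
  - intros y' g Heq; injection Heq as -> ->; split; [|simpl; rewrite assign_eq; auto].
    split; [exact Ha|]. right. split; auto. exists a; split; auto.
    eapply subform_trans; [exact Hsub|simpl; auto using subform_refl].
  - intros sf ->; simpl; rewrite assign_eq; auto.
Qed.

Lemma local_dia_right_refuted : In (x, FLDia a) (rhs c) ->
  same (atoms c) (atoms p) -> same (lhs c) (lhs p) ->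
  extends (rhs c) (rhs p) (fun l => exists y, l = (y, a) /\ In (ARel x y) (atoms c)) ->
  refuted_premise c [p] (Some (SR, x, FLDia a))
    [fun s => exists y, s = (SR, y, a) /\ In (ARel x y) (atoms c)] rho.
Proof.
  intros Hin H1 H2 H3. pose proof (HSyn (SR, x, FLDia a) Hin) as Hw.
  assert (Hwa : well_signed (SR, x, a)).
  { destruct Hw as [Ha [Hsub|[_ [a' [Ha' Hsub]]]]].
    - exfalso. apply (mu_form_subform phi0 _ Hmu Hsub).
    - inversion Ha'; subst. split; auto. }
  destruct (least_refuting_exists c rho (SR, x, FLDia a) HSI Hin) as [tp Htp].
  pose proof (proj1 (proj2 Htp)) as Hh. simpl in Hh.
  assert (Hy : forall y, In (ARel x y) (atoms c) -> ~ sem M (annot_env tp) a (rho y))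
    by (intros y' Hy HA; apply Hh; exists (rho y'); split; auto; apply (proj1 HSI _ Hy)).
  apply (premise_refuted_same_annot c [p] _ rho 0 p rho _ _ _ _ _ _ tp eq_refl
           H1 H2 H3 HSyn HSI (agree_on_refl c rho) Htp); try congruence.
  - intros t [].
  - intros y' g [].
  - intros y' g [y'' [Heq Hat]]; injection Heq as -> ->; split; [exact Hwa|simpl; auto].
  - intros sf [y' [-> Hat]]; simpl; auto.
Qed.

Lemma fix_left_rule_refuted e X : binds phi0 X e b -> In (x, FFix e X b) (lhs c) ->
  same (atoms c) (atoms p) -> extends (lhs c) (lhs p) (fun l => l = (x, b)) ->
  same (rhs c) (rhs p) ->
  refuted_premise c [p] (Some (SL, x, FFix e X b)) [fun s => s = (SL, x, b)] rho.
Proof.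
  intros Hb Hin H1 H2 H3. pose proof (HSyn (SL, x, FFix e X b) Hin) as Hw.
  pose proof Hw as [[Hsd Hs] _].
  destruct (least_refuting_exists c rho (SL, x, FFix e X b) HSI Hin) as [tp Htp].
  pose proof Htp as [Hc [Hh _]].
  destruct (fix_left_refuted tp e X b (rho x) Hb Hsd Hc Hh) as [t' [Hc' [Hh' HR]]].
  apply (premise_refuted c [p] _ _ rho 0 p rho _ _ _ eq_refl H1 H2 H3 HSyn HSI
           (agree_on_refl c rho)).
  - intros t [].
  - intros y' g Heq; injection Heq as -> ->; split; [new_subformula|exists t'; auto].
  - intros y' g [].
  - intros s x' g Heq; injection Heq as <- <- <-. exists tp; split; auto.
    intros sf Hsf _. simpl in Hsf. subst sf. exists t'; auto.
Qed.

Lemma fix_right_rule_refuted e X : binds phi0 X e b -> In (x, FFix e X b) (rhs c) ->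
  same (atoms c) (atoms p) -> same (lhs c) (lhs p) ->
  extends (rhs c) (rhs p) (fun l => l = (x, b)) ->
  refuted_premise c [p] (Some (SR, x, FFix e X b)) [fun s => s = (SR, x, b)] rho.
Proof.
  intros Hb Hin H1 H2 H3. pose proof (HSyn (SR, x, FFix e X b) Hin) as Hw.
  pose proof Hw as [[Hsd Hs] _].
  destruct (least_refuting_exists c rho (SR, x, FFix e X b) HSI Hin) as [tp Htp].
  pose proof Htp as [Hc [Hh _]].
  destruct (fix_right_refuted tp e X b (rho x) Hb Hsd Hc Hh) as [t' [Hc' [Hh' HR]]].
  apply (premise_refuted c [p] _ _ rho 0 p rho _ _ _ eq_refl H1 H2 H3 HSyn HSI
           (agree_on_refl c rho)).
  - intros t [].
  - intros y' g [].
  - intros y' g Heq; injection Heq as -> ->; split; [new_subformula|exists t'; auto].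
  - intros s x' g Heq; injection Heq as <- <- <-. exists tp; split; auto.
    intros sf Hsf _. simpl in Hsf. subst sf. exists t'; auto.
Qed.

Lemma regen_left_rule_refuted e X : binds phi0 X e b -> In (x, FVar X) (lhs c) ->
  same (atoms c) (atoms p) -> extends (lhs c) (lhs p) (fun l => l = (x, b)) ->
  same (rhs c) (rhs p) ->
  refuted_premise c [p] (Some (SL, x, FVar X)) [fun s => s = (SL, x, b)] rho.
Proof.
  intros Hb Hin H1 H2 H3. pose proof (HSyn (SL, x, FVar X) Hin) as [Hsd _].
  destruct (least_refuting_exists c rho (SL, x, FVar X) HSI Hin) as [tp Htp].
  pose proof Htp as [Hc [Hh _]].
  destruct (regen_left_refuted tp e X b (rho x) Hb Hsd Hc Hh) as [t' [Hc' [Hh' HR]]].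
  apply (premise_refuted c [p] _ _ rho 0 p rho _ _ _ eq_refl H1 H2 H3 HSyn HSI
           (agree_on_refl c rho)).
  - intros t [].
  - intros y' g Heq; injection Heq as -> ->; split; [|exists t'; auto].
    simpl in Hsd. rewrite <- Hsd. eapply well_signed_binder_body; eauto.
  - intros y' g [].
  - intros s x' g Heq; injection Heq as <- <- <-. exists tp; split; auto.
    intros sf Hsf _. simpl in Hsf. subst sf. exists t'; auto.
Qed.

Lemma regen_right_rule_refuted e X : binds phi0 X e b -> In (x, FVar X) (rhs c) ->
  same (atoms c) (atoms p) -> same (lhs c) (lhs p) ->
  extends (rhs c) (rhs p) (fun l => l = (x, b)) ->
  refuted_premise c [p] (Some (SR, x, FVar X)) [fun s => s = (SR, x, b)] rho.
Proof.
  intros Hb Hin H1 H2 H3. pose proof (HSyn (SR, x, FVar X) Hin) as [Hsd _].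
  destruct (least_refuting_exists c rho (SR, x, FVar X) HSI Hin) as [tp Htp].
  pose proof Htp as [Hc [Hh _]].
  destruct (regen_right_refuted tp e X b (rho x) Hb Hsd Hc Hh) as [t' [Hc' [Hh' HR]]].
  apply (premise_refuted c [p] _ _ rho 0 p rho _ _ _ eq_refl H1 H2 H3 HSyn HSI
           (agree_on_refl c rho)).
  - intros t [].
  - intros y' g [].
  - intros y' g Heq; injection Heq as -> ->; split; [|exists t'; auto].
    simpl in Hsd. rewrite <- Hsd. eapply well_signed_binder_body; eauto.
  - intros s x' g Heq; injection Heq as <- <- <-. exists tp; split; auto.
    intros sf Hsf _. simpl in Hsf. subst sf. exists t'; auto.
Qed.

End RuleCases.

Lemma rule_refuted_premise c ps pr ms rho : rule phi0 c ps pr ms ->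
  well_signed_seq c -> refutes rho c -> refuted_premise c ps pr ms rho.
Proof.
  intros Hr HSyn HSI. destruct Hr.
  - eapply pres_refuted; eauto.
  - eapply trans_refuted with (y := y); eauto.
  - eapply and_left_refuted; eauto.
  - eapply and_right_refuted; eauto.
  - eapply or_left_refuted; eauto.
  - eapply or_right_refuted; eauto.
  - eapply imp_left_refuted; eauto.
  - eapply imp_right_refuted; eauto.
  - eapply box_left_refuted; eauto.
  - eapply box_right_refuted with (y := y) (z := z); eauto.
  - eapply dia_left_refuted; eauto.
  - eapply dia_right_refuted; eauto.
  - eapply local_dia_right_refuted; eauto.
  - eapply fix_left_rule_refuted; eauto.
  - eapply fix_right_rule_refuted; eauto.
  - eapply regen_left_rule_refuted; eauto.
  - eapply regen_right_rule_refuted; eauto.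
Qed.

(** * A refuted branch *)

Lemma axiom_not_refuted c rho : axiom c -> ~ refutes rho c.
Proof.
  intros [x [P0 [Hl Hr]]] [_ H].
  destruct (H (SR, x, FProp P0) Hr) as [t2 [_ H2]]. simpl in H2.
  destruct Hl as [Hl|Hl]; destruct (H (SL, x, _) Hl) as [t1 [_ H1]]; simpl in H1; auto.
  apply H2, Wbot_V; auto.
Qed.

Lemma branch_S f n : branch f (S n) = branch f n ++ [f n].
Proof. unfold branch. rewrite seq_S, map_app. reflexivity. Qed.

Section Branch.
Variable P : PreProof phi0.

Definition refuted_node (a : list nat) (rho : nat -> W M) : Prop :=
  node P a /\ well_signed_seq (seqt P a) /\ refutes rho (seqt P a).

Definition refuted_step (a : list nat) (rho : nat -> W M) (i : nat) (rho' : nat -> W M) : Prop :=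
  agree_on (seqt P a) rho rho' /\
  minors_refuted (princ P a) (nth i (minors P a) (fun _ => False)) (seqt P (a ++ [i])) rho rho'.

Lemma refuted_node_rule a rho : refuted_node a rho ->
  rule phi0 (seqt P a) (map (fun i => seqt P (a ++ [i])) (seq 0 (nchild P a)))
    (princ P a) (minors P a).
Proof.
  intros [Hn [_ HSI]]. destruct (node_step phi0 P a Hn) as [[_ Hax]|[_ Hr]]; auto.
  exfalso. exact (axiom_not_refuted _ _ Hax HSI).
Qed.

Lemma refuted_node_child a rho : refuted_node a rho ->
  exists i rho', refuted_node (a ++ [i]) rho' /\ refuted_step a rho i rho'.
Proof.
  intros Hinv. pose proof (refuted_node_rule a rho Hinv) as Hr.
  destruct Hinv as [Hn [HSyn HSI]].
  destruct (rule_refuted_premise _ _ _ _ rho Hr HSyn HSI)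
    as [i [p [rho' [Hnth [HSyn' [HSI' [Hl HGS]]]]]]].
  rewrite nth_error_map, nth_error_seq in Hnth.
  destruct (Nat.ltb_spec i (nchild P a)) as [Hi|]; [|discriminate]. injection Hnth as <-.
  exists i, rho'. split; [split; [apply node_child; auto|split; auto]|split; auto].
Qed.

Lemma refuted_branch rho0 : refuted_node [] rho0 ->
  exists f rh, forall n, refuted_node (branch f n) (rh n) /\
                         refuted_step (branch f n) (rh n) (f n) (rh (S n)).
Proof.
  intros H0.
  destruct (dependent_choice (fun s => refuted_node (fst s) (snd s))
              (fun s s' => exists i, fst s' = fst s ++ [i] /\ refuted_step (fst s) (snd s) i (snd s')))
    with (s0 := ([] : list nat, rho0)) as [g [Hg0 Hg]]; auto.
  { intros [a rho] H. destruct (refuted_node_child a rho H) as [i [rho' [H1 H2]]].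
    exists (a ++ [i], rho'). split; [exact H1|exists i; auto]. }
  set (f := fun n => last (fst (g (S n))) 0).
  assert (Hstep : forall n, fst (g (S n)) = fst (g n) ++ [f n]).
  { intros n. destruct (proj2 (Hg n)) as [i [Hi _]]. unfold f. rewrite Hi, last_last; auto. }
  assert (Hbr : forall n, fst (g n) = branch f n).
  { induction n; [rewrite Hg0; reflexivity|]. rewrite Hstep, branch_S, IHn; auto. }
  exists f, (fun n => snd (g n)). intros n. rewrite <- !Hbr. split; [apply Hg|].
  destruct (proj2 (Hg n)) as [i [Hi Hs]].
  assert (Heq : [f n] = [i]) by (apply (app_inv_head (fst (g n))); rewrite <- Hi, <- Hstep; auto).
  injection Heq as ->. exact Hs.
Qed.

End Branch.

(** * Traces *)

Definition minor_rel (g h : form) : Prop :=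
  match g with
  | FAnd a b | FOr a b | FImp a b => h = a \/ h = b
  | FBox a | FLDia a => h = a
  | FDia a => h = a \/ h = FLDia a
  | FFix _ _ a => h = a
  | FVar Z => exists e b, binds phi0 Z e b /\ h = b
  | _ => False
  end.

Lemma rule_minor c ps s x g ms : rule phi0 c ps (Some (s, x, g)) ms ->
  forall i s' y h, nth i ms (fun _ => False) (s', y, h) -> minor_rel g h.
Proof.
  intros Hr. inversion Hr; subst; intros i s' y' h Hn;
  destruct i as [|[|i]]; simpl in Hn; try contradiction;
  try (destruct i; simpl in Hn; contradiction);
  repeat match type of Hn with
         | _ \/ _ => destruct Hn as [Hn|Hn]
         | exists _, _ => let y0 := fresh in destruct Hn as [y0 [Hn _]]
         end;
  injection Hn; intros; subst; simpl; eauto.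
Qed.

Lemma rule_var_binds c ps s x Z ms : rule phi0 c ps (Some (s, x, FVar Z)) ms ->
  exists e b, binds phi0 Z e b.
Proof. intros H. inversion H; subst; eauto. Qed.

(* the formulas a trace can visit inside the body [b] of a fixed point *)
Definition within (b h : form) : Prop := subform h b \/ exists a, h = FLDia a /\ subform a b.

Lemma within_minor b g h : within b g -> minor_rel g h -> (forall Z, g <> FVar Z) -> within b h.
Proof.
  intros Hw Hm Hv.
  assert (Himm : subform h g \/ exists a, h = FLDia a /\ subform a g).
  { destruct g; simpl in Hm; try contradiction; [exfalso; eapply Hv; eauto|..];
    repeat destruct Hm as [Hm|Hm]; subst; simpl; auto using subform_refl.
    right. exists g; simpl; auto using subform_refl. }
  destruct Hw as [Hg|[a [-> Ha]]].
  - destruct Himm as [Hh|[a [-> Ha]]]; [left|right; exists a; split]; auto;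
      eapply subform_trans; eauto.
  - simpl in Hm. subst. left; auto.
Qed.

Section Trace.
Variable P : PreProof phi0.
Variables (f : nat -> nat) (rh : nat -> nat -> W M).
Hypothesis Hbranch : forall n, refuted_node P (branch f n) (rh n) /\
                               refuted_step P (branch f n) (rh n) (f n) (rh (S n)).
Variable t : nat -> sform.
Hypothesis Htr : is_trace P f t.

Lemma trace_rule i : rule phi0 (seqt P (branch f i))
  (map (fun j => seqt P (branch f i ++ [j])) (seq 0 (nchild P (branch f i))))
  (princ P (branch f i)) (minors P (branch f i)).
Proof. eapply refuted_node_rule, Hbranch. Qed.

Lemma trace_annot_exists i : exists tau, least_refuting (rh i) (t i) tau.
Proof.
  destruct (Hbranch i) as [[_ [_ HSI]] _].
  eapply least_refuting_exists; [exact HSI|apply (proj1 Htr)].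
Qed.

Definition trace_annot (i : nat) : env M :=
  proj1_sig (constructive_indefinite_description _ (trace_annot_exists i)).

Lemma trace_annot_least i : least_refuting (rh i) (t i) (trace_annot i).
Proof. unfold trace_annot. destruct (constructive_indefinite_description _ _); auto. Qed.

Lemma regen_binds s Z i : regen_at P f t s Z i -> exists e b, binds phi0 Z e b.
Proof.
  intros [x [Ht [Hp _]]]. pose proof (trace_rule i) as Hr.
  rewrite Hp, Ht in Hr. eapply rule_var_binds; eauto.
Qed.

Lemma regen_side s Z i : regen_at P f t s Z i -> side_of Z = s.
Proof.
  intros [x [Ht _]]. destruct (Hbranch i) as [[_ [HSyn _]] _].
  pose proof (HSyn (t i) (proj1 Htr i)) as Hw. rewrite Ht in Hw. apply Hw.
Qed.

Lemma eventually_inf_regen :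
  exists N, forall i Z s, N <= i -> regen_at P f t s Z i -> any_regen_inf P f t Z.
Proof.
  assert (Hlist : forall l, exists N, forall i Z s, N <= i -> In Z l ->
                    regen_at P f t s Z i -> any_regen_inf P f t Z).
  { induction l as [|Z0 l [N1 IH]]; [exists 0; intros i Z s _ []|].
    destruct (classic (any_regen_inf P f t Z0)) as [Hi|Hi].
    - exists N1. intros i Z s HN [->|HZ] Hr; auto. eapply IH; eauto.
    - assert (Hfin : forall s, exists n, forall i, n <= i -> ~ regen_at P f t s Z0 i).
      { intro s. apply NNPP; intro Hn. apply Hi. destruct s; [left|right]; intro n;
        apply NNPP; intro Hn2; apply Hn; exists n; intros i Hi2 Hr; apply Hn2; eauto. }
      destruct (Hfin SL) as [n1 Hn1]. destruct (Hfin SR) as [n2 Hn2].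
      exists (max N1 (max n1 n2)). intros i Z s HN [->|HZ] Hr.
      + exfalso. destruct s; [apply (Hn1 i)|apply (Hn2 i)]; auto; lia.
      + apply (IH i Z s); auto; lia. }
  destruct (Hlist (binder_names (binders phi0))) as [N HN]. exists N. intros i Z s Hi Hr.
  eapply HN; eauto. destruct (regen_binds s Z i Hr) as [e [b Hb]].
  apply in_map_iff. exists (e, Z, b). split; auto. apply In_binders; auto.
Qed.

Lemma trace_annot_stay i : t (S i) = t i ->
  annot_le (binders phi0) (trace_annot (S i)) (trace_annot i).
Proof.
  intros Hst. destruct (Hbranch i) as [_ [Hag _]].
  destruct (trace_annot_least i) as [Hc [Hh _]].
  destruct (trace_annot_least (S i)) as [_ [_ Hmin]].
  apply Hmin; auto. rewrite Hst.
  eapply signed_holds_agree; [apply (proj1 Htr i)|exact Hag|exact Hh].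
Qed.

Lemma trace_annot_move i s x g : t i = (s, x, g) -> princ P (branch f i) = Some (s, x, g) ->
  minor_at P f i (t (S i)) -> exists tp t', annot_eq (binders phi0) tp (trace_annot i) /\
    annot_le (binders phi0) (trace_annot (S i)) t' /\ annot_step g tp t'.
Proof.
  intros Ht Hp Hmin. destruct (Hbranch i) as [_ [_ HGS]].
  destruct (HGS s x g Hp) as [tp [Htp Hall]].
  assert (Hin : in_sequent (seqt P (branch f i ++ [f i])) (t (S i)))
    by (rewrite <- branch_S; apply (proj1 Htr)).
  destruct (Hall (t (S i)) Hmin Hin) as [t' [Hc' [Hh' HR]]].
  exists tp, t'. split; [|split; auto].
  - eapply least_annot_unique; [exact Htp|]. rewrite <- Ht. apply trace_annot_least.
  - destruct (trace_annot_least (S i)) as [_ [_ H3]]. apply H3; auto.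
Qed.

Section Progress.
Variables (X : nat) (e : eta) (b : form) (l1 l2 : list binder) (k0 : nat) (sX : side).
Hypothesis HLs : binders phi0 = l1 ++ (e, X, b) :: binders b ++ l2.
Hypothesis Hprog : progressive e X = true.
Hypothesis Hk0 : regen_at P f t sX X k0.
Hypothesis Hnested : forall i s Z e' b', k0 <= i -> regen_at P f t s Z i -> binds phi0 Z e' b' ->
  subform (FFix e' Z b') (FFix e X b).

Let HbX : binds phi0 X e b := binds_of_binders _ _ _ _ _ HLs.

Lemma trace_within_body d : within b (snd (t (S k0 + d))).
Proof.
  induction d as [|d IHd].
  - destruct Hk0 as [x0 [Hk [Hp Hmin]]]. pose proof (trace_rule k0) as Hr.
    rewrite Hp, Hk in Hr. unfold minor_at in Hmin. rewrite Nat.add_0_r.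
    destruct (t (S k0)) as [[s' y] h]. simpl.
    destruct (rule_minor _ _ _ _ _ _ Hr _ _ _ _ Hmin) as [e' [b' [Hb' ->]]].
    destruct (binds_unique X e' b' e b Hb' HbX) as [_ ->]. left; apply subform_refl.
  - replace (S k0 + S d) with (S (S k0 + d)) by lia. set (i := S k0 + d) in *.
    destruct (proj2 Htr i) as [Hst|[Hp Hmin]]; [rewrite Hst; auto|].
    destruct (t i) as [[s0 x0] g] eqn:Eg. pose proof (trace_rule i) as Hr. rewrite Hp in Hr.
    unfold minor_at in Hmin. destruct (t (S i)) as [[s1 y] h] eqn:Eh. simpl in *.
    pose proof (rule_minor _ _ _ _ _ _ Hr _ _ _ _ Hmin) as Hm.
    destruct (classic (exists Z, g = FVar Z)) as [[Z ->]|Hv].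
    + destruct Hm as [e' [b' [Hb' ->]]].
      assert (Hreg : regen_at P f t s0 Z i)
        by (exists x0; rewrite Eg; repeat split; auto; unfold minor_at; rewrite Eh; auto).
      destruct (Hnested i s0 Z e' b' ltac:(unfold i; lia) Hreg Hb') as [Heq|Hsub].
      * injection Heq as _ _ ->. left; apply subform_refl.
      * left. eapply subform_trans; [exact Hsub|apply subform_fix_body].
    + apply (within_minor b g h); auto. intros Z HZ. apply Hv; eauto.
Qed.

Lemma annot_eq_upto_X a c : annot_eq (binders phi0) a c -> annot_eq (upto_X X e b l1) a c.
Proof. rewrite (binders_upto_X _ _ _ _ _ HLs), annot_eq_app. tauto. Qed.

Lemma annot_le_upto_X a c : annot_le (binders phi0) a c -> annot_le (upto_X X e b l1) a c.
Proof. rewrite (binders_upto_X _ _ _ _ _ HLs). apply annot_le_app_l. Qed.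

Lemma trace_annot_regen_lt i s : regen_at P f t s X i ->
  annot_lt (upto_X X e b l1) (trace_annot (S i)) (trace_annot i).
Proof.
  intros [x [Ht [Hp Hmin]]]. rewrite Ht in Hp.
  destruct (trace_annot_move i s x (FVar X) Ht Hp Hmin) as [tp [t' [Heq [Hle [HR _]]]]].
  destruct (HR X eq_refl) as [D [-> Hs]]; [rewrite (binder_eta_binds _ _ _ HbX); auto|].
  rewrite (binder_eta_binds _ _ _ HbX) in Hs.
  eapply annot_le_lt_trans; [apply annot_le_upto_X, Hle|].
  eapply annot_lt_eq_trans; [apply (reset_X_lt _ _ _ _ _ HLs tp D Hprog Hs)|].
  apply annot_eq_upto_X; auto.
Qed.

Lemma trace_annot_nonincreasing i : k0 <= i ->
  annot_le (upto_X X e b l1) (trace_annot (S i)) (trace_annot i).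
Proof.
  intros Hi. destruct (classic (exists s, regen_at P f t s X i)) as [[s Hr]|HnX].
  { left. eapply trace_annot_regen_lt; eauto. }
  destruct (proj2 Htr i) as [Hst|[Hp Hmin]].
  { apply annot_le_upto_X, trace_annot_stay; auto. }
  destruct (t i) as [[s x] g] eqn:Ht.
  destruct (trace_annot_move i s x g Ht Hp Hmin) as [tp [t' [Heq [Hle [_ HR]]]]].
  eapply annot_le_trans; [apply annot_le_upto_X, Hle|].
  eapply annot_le_trans; [|right; apply annot_eq_upto_X, Heq].
  destruct HR as [->|[Z [D [-> Hg]]]]; [right; apply annot_eq_refl|right].
  apply (reset_below_X_eq _ _ _ _ _ HLs).
  destruct Hg as [[e0 [b0 ->]]| ->].
  - assert (Hik : k0 <> i) by (intros <-; apply HnX; eauto).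
    pose proof (trace_within_body (i - S k0)) as Hw.
    replace (S k0 + (i - S k0)) with i in Hw by lia. rewrite Ht in Hw.
    destruct Hw as [Hsub|[a [Ha _]]]; [|discriminate].
    exists e, b, e0, b0. auto.
  - assert (Hreg : regen_at P f t s Z i) by (exists x; rewrite Ht; auto).
    destruct (regen_binds s Z i Hreg) as [e' [b' Hb']].
    destruct (Hnested i s Z e' b' Hi Hreg Hb') as [Heq'|Hsub].
    + injection Heq' as _ -> _. exfalso; apply HnX; eauto.
    + exists e, b, e', b'. split; auto.
Qed.

Lemma trace_annot_chain j k : k0 <= j -> j <= k ->
  annot_le (upto_X X e b l1) (trace_annot k) (trace_annot j).
Proof.
  intros Hj Hk. induction Hk as [|k Hk IH]; [right; apply annot_eq_refl|].
  eapply annot_le_trans; [apply trace_annot_nonincreasing; lia|exact IH].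
Qed.

End Progress.

Lemma trace_not_progressing : ~ progressing P f t.
Proof.
  intros [X [e [b [HbX [_ [Hout Hside]]]]]].
  destruct eventually_inf_regen as [N HN].
  assert (Hprog : exists sX, regen_inf P f t sX X /\ progressive e X = true).
  { destruct Hside as [[-> H]|[-> H]]; [exists SR|exists SL]; split; auto;
    destruct (H 0) as [k [_ Hk]]; unfold progressive; rewrite (regen_side _ _ _ Hk); auto. }
  destruct Hprog as [sX [HsX Hprog]].
  destruct (HsX N) as [k0 [Hk0N Hk0]].
  destruct (binders_split _ _ _ _ HbX) as [l1 [l2 HLs]].
  assert (Hnested : forall i s Z e' b', k0 <= i -> regen_at P f t s Z i -> binds phi0 Z e' b' ->
            subform (FFix e' Z b') (FFix e X b))
    by (intros i s Z e' b' Hi Hr Hb; apply (Hout Z e' b' Hb); eapply HN; [|exact Hr]; lia).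
  set (R := fun t1 t2 => coherent t1 /\ coherent t2 /\ annot_lt (upto_X X e b l1) t1 t2).
  apply (Acc_no_descent R (fun tau => exists j, k0 <= j /\ tau = trace_annot j))
    with (a := trace_annot k0); [|apply (annot_lt_wf _ _ (binders_upto_X _ _ _ _ _ HLs));
                                  apply trace_annot_least|eauto].
  intros tau [j [Hj ->]]. destruct (HsX j) as [k [Hk Hrk]].
  exists (trace_annot (S k)). split; [exists (S k); split; [lia|auto]|].
  split; [apply trace_annot_least|split; [apply trace_annot_least|]].
  eapply annot_lt_le_trans; [eapply (trace_annot_regen_lt X e b l1 l2 HLs Hprog); eauto|].
  apply (trace_annot_chain X e b l1 l2 k0 sX HLs Hprog Hk0 Hnested); auto.
Qed.

End Trace.

Lemma root_refuted (P : PreProof phi0) x w : root_is P x phi0 -> ~ sat M w phi0 ->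
  refuted_node P [] (fun _ => w).
Proof.
  intros [Ha [Hl Hr]] Hns.
  assert (Hroot : forall sf, in_sequent (seqt P []) sf -> sf = (SR, x, phi0)).
  { intros [[[|] y] g] Hin; simpl in Hin.
    - destruct (proj2 (Hl _) (or_introl Hin)).
    - destruct (proj2 (Hr _) (or_introl Hin)) as [Heq|[]]. injection Heq as -> ->; auto. }
  split; [apply node_root|split; [|split]].
  - intros sf Hin. rewrite (Hroot sf Hin). split; [apply sided_phi0|left; apply subform_refl].
  - intros t Ht. destruct (proj2 (Ha _) (or_introl Ht)).
  - intros sf Hin. rewrite (Hroot sf Hin). exists bot_annot. split; [apply bot_annot_coherent|].
    simpl. rewrite (sem_ext M phi0 _ (fun _ _ => False)); auto.
    intros Y HY; exfalso; apply (Hsent Y HY).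
Qed.

End Soundness.

Theorem mainTheorem6 :
  forall (phi : form), mu_form phi -> well_named phi -> sentence phi ->
  forall (M : CKModel) (w : W M), ~ sat M w phi ->
  forall (x : nat) (P : PreProof phi), root_is P x phi -> ~ is_proof P.
Proof.
  intros phi Hmu [_ Hwb] Hsent M w Hns x P Hroot Hpf.
  destruct (refuted_branch phi Hmu Hwb Hsent M P (fun _ => w)
              (root_refuted phi Hmu Hwb Hsent M P x w Hroot Hns)) as [f [rh Hbranch]].
  destruct (Hpf f (fun n => proj1 (proj1 (Hbranch n)))) as [t [Htr Hprog]].
  exact (trace_not_progressing phi Hmu Hwb Hsent M P f rh Hbranch t Htr Hprog).
Qed.
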